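(* Consider the controlled network SIS system $\dot x=(-D-H(x)+B-XB)x$, with $B$ irreducible, where $H(x)=\operatorname{diag}(h_1(x_1),\dots,h_n(x_n))$ and each $h_i:[0,1]\to\mathbb{R}_{\ge0}$ is bounded, smooth, monotonically nondecreasing, with $h_i(0)=0$. Suppose $s(-D+B)>0$. Then: (1) in $\Xi_n$ the system has exactly two equilibria, $0_n$, which is unstable, and a unique endemic equilibrium $x^*\in\operatorname{int}(\Xi_n)$, which is locally exponentially stable; (2) for every $x(0)\in\Xi_n\setminus\{0_n\}$, $x(t)\to x^*$ exponentially fast as $t\to\infty$.
   Context: $n\ge2$, $D=\operatorname{diag}(d_1,\dots,d_n)$ with $d_i>0$, $B=(b_{ij})\in\mathbb{R}^{n\times n}$ entrywise nonnegative, $X=\operatorname{diag}(x_1,\dots,x_n)$; componentwise $\dot x_i=-(d_i+h_i(x_i))x_i+(1-x_i)\sum_j b_{ij}x_j$. $B$ irreducible is equivalent to the associated directed graph being strongly connected. $\Xi_n=[0,1]^n$. $s(M)$ denotes the largest real part of the eigenvalues of a square matrix $M$. *)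

(* classical reals (derivatives, exp). Vectors in R^n are
   functions nat -> R, only indices i < n are meaningful; n x n matrices are
   functions nat -> nat -> R. *)
From Stdlib Require Export Reals Lra Lia Arith.
Open Scope R_scope.

Fixpoint vsum (n : nat) (f : nat -> R) : R :=
  match n with O => 0 | S k => vsum k f + f k end.

Definition vnorm (n : nat) (u : nat -> R) : R := vsum n (fun i => Rabs (u i)).

Definition vsub (u v : nat -> R) : nat -> R := fun i => u i - v i.

Definition veq (n : nat) (u v : nat -> R) : Prop :=
  forall i, (i < n)%nat -> u i = v i.

Definition zerov : nat -> R := fun _ => 0.

Definition mv (n : nat) (M : nat -> nat -> R) (u : nat -> R) : nat -> R :=
  fun i => vsum n (fun j => M i j * u j).

Definition in_Xi (n : nat) (x : nat -> R) : Prop :=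
  forall i, (i < n)%nat -> 0 <= x i <= 1.
Definition in_int_Xi (n : nat) (x : nat -> R) : Prop :=
  forall i, (i < n)%nat -> 0 < x i < 1.

(* (a + i b) is a (complex) eigenvalue of the real n x n matrix M:
   there is a nonzero complex vector u + i v with M(u+iv) = (a+ib)(u+iv). *)
Definition is_eigenvalue (n : nat) (M : nat -> nat -> R) (a b : R) : Prop :=
  exists u v : nat -> R,
    (exists i, (i < n)%nat /\ (u i <> 0 \/ v i <> 0)) /\
    (forall i, (i < n)%nat -> mv n M u i = a * u i - b * v i) /\
    (forall i, (i < n)%nat -> mv n M v i = b * u i + a * v i).

Definition spectral_abscissa (n : nat) (M : nat -> nat -> R) (s : R) : Prop :=
  is_lub (fun a => exists b, is_eigenvalue n M a b) s.

Definition mDpB (d : nat -> R) (B : nat -> nat -> R) : nat -> nat -> R :=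
  fun i j => (if Nat.eqb i j then - d i else 0) + B i j.

Inductive reach (n : nat) (B : nat -> nat -> R) (i : nat) : nat -> Prop :=
| reach_refl : reach n B i i
| reach_step : forall k j, reach n B i k -> (j < n)%nat -> B k j <> 0 ->
    reach n B i j.

(* B irreducible <=> associated digraph strongly connected *)
Definition irreducible (n : nat) (B : nat -> nat -> R) : Prop :=
  forall i j, (i < n)%nat -> (j < n)%nat -> reach n B i j.

(* derivative of f at x relative to the set S (one-sided at boundary points) *)
Definition deriv_on (S : R -> Prop) (f : R -> R) (x l : R) : Prop :=
  limit1_in (fun y => (f y - f x) / (y - x)) (fun y => S y /\ y <> x) l x.

Definition I01 (x : R) : Prop := 0 <= x <= 1.

Definition smooth_on01 (h : R -> R) : Prop :=
  exists Dk : nat -> R -> R,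
    (forall x, I01 x -> Dk O x = h x) /\
    (forall k x, I01 x -> deriv_on I01 (Dk k) x (Dk (S k) x)).

Definition good_h (h : R -> R) : Prop :=
  (forall x, I01 x -> 0 <= h x) /\
  (exists M, forall x, I01 x -> h x <= M) /\
  smooth_on01 h /\
  (forall x y, I01 x -> I01 y -> x <= y -> h x <= h y) /\
  h 0 = 0.

Definition sis_rhs (n : nat) (d : nat -> R) (B : nat -> nat -> R)
  (h : nat -> R -> R) (x : nat -> R) : nat -> R :=
  fun i => - (d i + h i (x i)) * x i + (1 - x i) * mv n B x i.

(* a solution on [0, +oo) of the system, living in Xi_n (the domain of H) *)
Definition is_solution (n : nat) (d : nat -> R) (B : nat -> nat -> R)
  (h : nat -> R -> R) (x : R -> nat -> R) : Prop :=
  forall t, 0 <= t ->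
    in_Xi n (x t) /\
    forall i, (i < n)%nat ->
      deriv_on (fun s => 0 <= s) (fun s => x s i) t (sis_rhs n d B h (x t) i).

Definition is_equilibrium (n : nat) (d : nat -> R) (B : nat -> nat -> R)
  (h : nat -> R -> R) (e : nat -> R) : Prop :=
  in_Xi n e /\ forall i, (i < n)%nat -> sis_rhs n d B h e i = 0.

Definition unstable (n : nat) d B h (e : nat -> R) : Prop :=
  exists eps, 0 < eps /\ forall delta, 0 < delta ->
    exists x, is_solution n d B h x /\ vnorm n (vsub (x 0) e) < delta /\
      exists t, 0 <= t /\ eps <= vnorm n (vsub (x t) e).

Definition loc_exp_stable (n : nat) d B h (e : nat -> R) : Prop :=
  exists delta C gamma, 0 < delta /\ 0 < C /\ 0 < gamma /\
    forall x, is_solution n d B h x -> vnorm n (vsub (x 0) e) < delta ->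
      forall t, 0 <= t ->
        vnorm n (vsub (x t) e) <= C * exp (- gamma * t) * vnorm n (vsub (x 0) e).

(* Since s(-D + B) > 0, the moduli of an eigenvector of -D + B for an eigenvalue with
   positive real part form a nonnegative vector a with (-D + B) a >= r a, r > 0; as h
   vanishes at 0, a small multiple of a is a subsolution of the equilibrium equations.
   Moving every node to its rest state for the current infection force, starting from
   the all-ones state, gives a decreasing sequence above that subsolution whose limit is
   a nonzero equilibrium xs.  Irreducibility makes xs, and every nonzero trajectory
   after positive time, strictly positive.

   Because the system is cooperative and h is nondecreasing, for small enough rates
   g > 0 no trajectory starting between xs (1 - K) and xs (1 + K) leaves the barriers
   xs (1 -+ K e^{-g t}): at a first contact the barrier moves away faster than the
   state.  This yields exponential convergence to xs from every nonzero state and local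
   exponential stability; hence xs is the only nonzero equilibrium, and 0 is unstable
   since arbitrarily small nonzero states still converge to xs.  Solutions exist by
   Picard iteration for the field clamped to [0,1]^n, which is bounded and globally
   Lipschitz and whose solutions never leave [0,1]^n. *)

From Stdlib Require Import Reals Lra Lia Psatz Classical ClassicalEpsilon.
From Coquelicot Require Import Coquelicot.
Open Scope R_scope.

Lemma vsum_ext n f g : (forall i, (i < n)%nat -> f i = g i) -> vsum n f = vsum n g.
Proof.
  induction n; simpl; intros H; auto.
  rewrite IHn, H by (lia || (intros; apply H; lia)). auto.
Qed.

Lemma vsum_le n f g : (forall i, (i < n)%nat -> f i <= g i) -> vsum n f <= vsum n g.
Proof.
  induction n; simpl; intros H; [lra|].
  assert (f n <= g n) by (apply H; lia).
  assert (vsum n f <= vsum n g) by (apply IHn; intros; apply H; lia). lra.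
Qed.

Lemma vsum_zero n : vsum n (fun _ => 0) = 0.
Proof. induction n; simpl; auto. rewrite IHn; ring. Qed.

Lemma vsum_nonneg n f : (forall i, (i < n)%nat -> 0 <= f i) -> 0 <= vsum n f.
Proof. intros H. rewrite <- (vsum_zero n). apply vsum_le; auto. Qed.

Lemma vsum_plus n f g : vsum n (fun i => f i + g i) = vsum n f + vsum n g.
Proof. induction n; simpl; [ring|]. rewrite IHn; ring. Qed.

Lemma vsum_scal n c f : vsum n (fun i => c * f i) = c * vsum n f.
Proof. induction n; simpl; [ring|]. rewrite IHn; ring. Qed.

Lemma vsum_minus n f g : vsum n (fun i => f i - g i) = vsum n f - vsum n g.
Proof. induction n; simpl; [ring|]. rewrite IHn; ring. Qed.

Lemma vsum_const n c : vsum n (fun _ => c) = INR n * c.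
Proof. induction n; simpl vsum; [simpl; ring|]. rewrite IHn, S_INR; ring. Qed.

Lemma vsum_abs n f : Rabs (vsum n f) <= vsum n (fun i => Rabs (f i)).
Proof.
  induction n; simpl; [rewrite Rabs_R0; lra|].
  eapply Rle_trans; [apply Rabs_triang | lra].
Qed.

Lemma vsum_term n f k :
  (k < n)%nat -> (forall i, (i < n)%nat -> 0 <= f i) -> f k <= vsum n f.
Proof.
  induction n; intros Hk H; [lia|]. simpl.
  assert (0 <= f n) by (apply H; lia).
  destruct (Nat.eq_dec k n) as [->|Hne].
  - assert (0 <= vsum n f) by (apply vsum_nonneg; intros; apply H; lia). lra.
  - assert (f k <= vsum n f) by (apply IHn; [lia | intros; apply H; lia]). lra.
Qed.

Lemma vsum_delta n k f :
  (k < n)%nat -> vsum n (fun j => if Nat.eqb k j then f j else 0) = f k.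
Proof.
  induction n; intros Hk; [lia|]. simpl. destruct (Nat.eq_dec k n) as [->|Hne].
  - rewrite Nat.eqb_refl, (vsum_ext n _ (fun _ => 0)), vsum_zero; [ring|].
    intros i Hi. destruct (Nat.eqb_spec n i); [lia | auto].
  - rewrite IHn by lia. destruct (Nat.eqb_spec k n); [lia | ring].
Qed.

Lemma vnorm_nonneg n u : 0 <= vnorm n u.
Proof. apply vsum_nonneg. intros; apply Rabs_pos. Qed.

Lemma vnorm_term n u k : (k < n)%nat -> Rabs (u k) <= vnorm n u.
Proof. intros Hk. apply (vsum_term n (fun i => Rabs (u i))); auto. intros; apply Rabs_pos. Qed.

Lemma vnorm_sub_triangle n u v w :
  vnorm n (vsub u w) <= vnorm n (vsub u v) + vnorm n (vsub v w).
Proof.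
  unfold vnorm, vsub. rewrite <- vsum_plus. apply vsum_le. intros i _.
  replace (u i - w i) with ((u i - v i) + (v i - w i)) by ring. apply Rabs_triang.
Qed.

Lemma vnorm_le_of_componentwise n u c :
  (forall i, (i < n)%nat -> Rabs (u i) <= c) -> vnorm n u <= INR n * c.
Proof. intros H. rewrite <- vsum_const. apply vsum_le; auto. Qed.

Lemma mv_scal n M c u i : mv n M (fun j => c * u j) i = c * mv n M u i.
Proof. unfold mv. rewrite <- vsum_scal. apply vsum_ext; intros; ring. Qed.

Lemma mv_minus n M u v i : mv n M u i - mv n M v i = vsum n (fun j => M i j * (u j - v j)).
Proof. unfold mv. rewrite <- vsum_minus. apply vsum_ext; intros; ring. Qed.

Lemma mv_le n M u v i :
  (forall j, (j < n)%nat -> 0 <= M i j) -> (forall j, (j < n)%nat -> u j <= v j) ->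
  mv n M u i <= mv n M v i.
Proof. intros HM H. apply vsum_le. intros j Hj. apply Rmult_le_compat_l; auto. Qed.

Lemma mv_nonneg n M u i :
  (forall j, (j < n)%nat -> 0 <= M i j) -> (forall j, (j < n)%nat -> 0 <= u j) ->
  0 <= mv n M u i.
Proof. intros. apply vsum_nonneg; intros; apply Rmult_le_pos; auto. Qed.

Lemma mv_term n M u i j :
  (j < n)%nat -> (forall j, (j < n)%nat -> 0 <= M i j) -> (forall j, (j < n)%nat -> 0 <= u j) ->
  M i j * u j <= mv n M u i.
Proof. intros. apply (vsum_term n (fun j => M i j * u j)); auto. intros; apply Rmult_le_pos; auto. Qed.

Lemma mv_mDpB n d B u k :
  (k < n)%nat -> mv n (mDpB d B) u k = - d k * u k + mv n B u k.
Proof.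
  intros Hk. unfold mv, mDpB.
  rewrite (vsum_ext n _ (fun j => (if Nat.eqb k j then - d k * u j else 0) + B k j * u j)).
  - rewrite vsum_plus, vsum_delta by auto. auto.
  - intros j Hj. destruct (Nat.eqb k j); ring.
Qed.

Lemma Un_cv_mv n M (u : nat -> nat -> R) (l : nat -> R) i :
  (forall j, (j < n)%nat -> Un_cv (fun k => u k j) (l j)) ->
  Un_cv (fun k => mv n M (u k) i) (mv n M l i).
Proof.
  unfold mv. induction n; intros H; simpl.
  - intros eps He. exists 0%nat. intros; unfold Rdist; rewrite Rminus_diag, Rabs_R0; auto.
  - apply CV_plus; [apply IHn; intros; apply H; lia |].
    apply CV_mult; [| apply H; lia].
    intros eps He; exists 0%nat; intros; unfold Rdist; rewrite Rminus_diag, Rabs_R0; auto.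
Qed.

Lemma not_veq_zerov n u : ~ veq n u zerov -> exists k, (k < n)%nat /\ u k <> 0.
Proof.
  intros Hnz. apply NNPP; intros Hn; apply Hnz. intros k Hk.
  apply NNPP; intros Hne. apply Hn; exists k; auto.
Qed.

Lemma exists_uniform_small n (P : nat -> R -> Prop) :
  (forall j e e', 0 < e' <= e -> P j e -> P j e') ->
  (forall j, (j < n)%nat -> exists e, 0 < e /\ P j e) ->
  exists e, 0 < e /\ forall j, (j < n)%nat -> P j e.
Proof.
  intros Hm. induction n; intros H; [exists 1; split; [lra | intros; lia] |].
  destruct IHn as [e1 [He1 H1]]; [intros; apply H; lia |].
  destruct (H n) as [e2 [He2 H2]]; [lia |].
  assert (0 < Rmin e1 e2) by (apply Rmin_glb_lt; auto).
  exists (Rmin e1 e2); split; auto. intros j Hj. destruct (Nat.eq_dec j n) as [->|].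
  - apply Hm with e2; auto. split; auto. apply Rmin_r.
  - apply Hm with e1; [split; auto; apply Rmin_l | apply H1; lia].
Qed.

Lemma exists_uniform_large n (P : nat -> R -> Prop) :
  (forall j e e', e <= e' -> P j e -> P j e') ->
  (forall j, (j < n)%nat -> exists e, P j e) ->
  exists e, 0 < e /\ forall j, (j < n)%nat -> P j e.
Proof.
  intros Hm. induction n; intros H; [exists 1; split; [lra | intros; lia] |].
  destruct IHn as [e1 [He1 H1]]; [intros; apply H; lia |].
  destruct (H n) as [e2 H2]; [lia |].
  exists (Rmax e1 e2); split; [eapply Rlt_le_trans; [apply He1 | apply Rmax_l] |].
  intros j Hj. destruct (Nat.eq_dec j n) as [->|].
  - apply Hm with e2; auto. apply Rmax_r.
  - apply Hm with e1; [apply Rmax_l | apply H1; lia].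
Qed.

Lemma exists_pos_lower_bound n (a : nat -> R) :
  (forall j, (j < n)%nat -> 0 < a j) -> exists m, 0 < m /\ forall j, (j < n)%nat -> m <= a j.
Proof.
  intros H. apply (exists_uniform_small n (fun j m => m <= a j)); [intros; lra |].
  intros j Hj; exists (a j); split; [apply H; auto | lra].
Qed.

Lemma deriv_on_iff S f t l : deriv_on S f t l <->
  forall eps, 0 < eps -> exists alp, 0 < alp /\
    forall y, S y -> y <> t -> Rabs (y - t) < alp -> Rabs ((f y - f t) / (y - t) - l) < eps.
Proof.
  unfold deriv_on, limit1_in, limit_in; simpl; unfold Rdist. split.
  - intros H eps He. destruct (H eps He) as [a [Ha Ha']]. exists a; split; auto.
  - intros H eps He. destruct (H eps He) as [a [Ha Ha']]. exists a; split; auto.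
    intros x [[Hx1 Hx2] Hx3]; auto.
Qed.

Lemma deriv_on_of_derivable S f t l : derivable_pt_lim f t l -> deriv_on S f t l.
Proof.
  intros H. apply deriv_on_iff. intros eps He. destruct (H eps He) as [dl Hd].
  exists dl; split; [apply cond_pos |]. intros y _ Hy Hyt.
  replace y with (t + (y - t)) at 1 by ring. apply Hd; auto. lra.
Qed.

Lemma deriv_on_ext S f g t l :
  (forall y, S y -> f y = g y) -> f t = g t -> deriv_on S f t l -> deriv_on S g t l.
Proof.
  intros Hfg Ht H. rewrite deriv_on_iff in *. intros eps He.
  destruct (H eps He) as [a [Ha Ha']]. exists a; split; auto. intros y Sy Hy Hyt.
  rewrite <- Hfg, <- Ht by auto. auto.
Qed.

Lemma deriv_on_minus S f g t l m :
  deriv_on S f t l -> deriv_on S g t m -> deriv_on S (fun y => f y - g y) t (l - m).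
Proof.
  rewrite !deriv_on_iff. intros Hf Hg eps He.
  destruct (Hf (eps / 2) ltac:(lra)) as [a1 [Ha1 H1]].
  destruct (Hg (eps / 2) ltac:(lra)) as [a2 [Ha2 H2]].
  exists (Rmin a1 a2); split; [apply Rmin_glb_lt; auto |].
  intros y Sy Hy Hyt.
  specialize (H1 y Sy Hy (Rlt_le_trans _ _ _ Hyt (Rmin_l _ _))).
  specialize (H2 y Sy Hy (Rlt_le_trans _ _ _ Hyt (Rmin_r _ _))).
  replace ((f y - g y - (f t - g t)) / (y - t) - (l - m))
    with (((f y - f t) / (y - t) - l) - ((g y - g t) / (y - t) - m)) by (field; lra).
  eapply Rle_lt_trans; [apply Rabs_triang |]. rewrite Rabs_Ropp. lra.
Qed.

Lemma deriv_on_plus S f g t l m :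
  deriv_on S f t l -> deriv_on S g t m -> deriv_on S (fun y => f y + g y) t (l + m).
Proof.
  rewrite !deriv_on_iff. intros Hf Hg eps He.
  destruct (Hf (eps / 2) ltac:(lra)) as [a1 [Ha1 H1]].
  destruct (Hg (eps / 2) ltac:(lra)) as [a2 [Ha2 H2]].
  exists (Rmin a1 a2); split; [apply Rmin_glb_lt; auto |].
  intros y Sy Hy Hyt.
  specialize (H1 y Sy Hy (Rlt_le_trans _ _ _ Hyt (Rmin_l _ _))).
  specialize (H2 y Sy Hy (Rlt_le_trans _ _ _ Hyt (Rmin_r _ _))).
  replace ((f y + g y - (f t + g t)) / (y - t) - (l + m))
    with (((f y - f t) / (y - t) - l) + ((g y - g t) / (y - t) - m)) by (field; lra).
  eapply Rle_lt_trans; [apply Rabs_triang | lra].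
Qed.

Lemma deriv_on_continuous S f t l : deriv_on S f t l ->
  forall eps, 0 < eps -> exists dl, 0 < dl /\
    forall s, S s -> Rabs (s - t) < dl -> Rabs (f s - f t) < eps.
Proof.
  rewrite deriv_on_iff. intros H eps He. destruct (H 1 ltac:(lra)) as [a [Ha H1]].
  set (c := Rabs l + 1). assert (Hc : 0 < c) by (unfold c; pose proof (Rabs_pos l); lra).
  exists (Rmin a (eps / c)); split; [apply Rmin_glb_lt; auto; apply Rdiv_lt_0_compat; lra |].
  intros s Hs Hst. destruct (Req_dec s t) as [->|Hne]; [rewrite Rminus_diag, Rabs_R0; lra |].
  specialize (H1 s Hs Hne (Rlt_le_trans _ _ _ Hst (Rmin_l _ _))).
  assert (Hst2 : Rabs (s - t) < eps / c) by (eapply Rlt_le_trans; [apply Hst | apply Rmin_r]).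
  set (q := (f s - f t) / (s - t)) in *.
  assert (Hqe : f s - f t = q * (s - t)) by (unfold q; field; lra).
  assert (Hq : Rabs q <= c).
  { unfold c. replace q with ((q - l) + l) by ring.
    eapply Rle_trans; [apply Rabs_triang | lra]. }
  rewrite Hqe, Rabs_mult.
  apply Rle_lt_trans with (c * Rabs (s - t)); [apply Rmult_le_compat_r; auto; apply Rabs_pos |].
  apply Rmult_lt_reg_r with (/ c); [apply Rinv_0_lt_compat; lra |].
  replace (eps * / c) with (eps / c) by auto. field_simplify; lra.
Qed.

Lemma deriv_on_pos_left f T l : 0 < T ->
  deriv_on (fun s => 0 <= s) f T l -> 0 < l ->
  exists dl, 0 < dl /\ forall s, T - dl < s < T -> 0 <= s -> f s < f T.
Proof.
  rewrite deriv_on_iff. intros HT H Hl. destruct (H l Hl) as [a [Ha H1]].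
  exists a; split; auto. intros s Hs Hs0.
  assert (Hq := H1 s Hs0 ltac:(lra) ltac:(rewrite Rabs_left; lra)).
  apply Rabs_def2 in Hq. destruct Hq as [_ Hq].
  set (q := (f s - f T) / (s - T)) in *.
  assert (q * (s - T) = f s - f T) by (unfold q; field; lra).
  nra.
Qed.

Lemma point_left_of a T dl : a < T -> 0 < dl -> exists s, a <= s < T /\ T - dl < s.
Proof.
  intros HaT Hdl. exists (Rmax a (T - dl / 2)).
  pose proof (Rmax_l a (T - dl / 2)). pose proof (Rmax_r a (T - dl / 2)).
  assert (Rmax a (T - dl / 2) < T) by (apply Rmax_lub_lt; lra). lra.
Qed.

Lemma deriv_on_continuous_right f t l t0 : 0 <= t0 ->
  deriv_on (fun s => 0 <= s) f t l ->
  forall eps, 0 < eps -> exists dl, 0 < dl /\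
    forall s, t0 <= s -> Rabs (s - t) < dl -> Rabs (f s - f t) < eps.
Proof.
  intros Ht0 H eps He. destruct (deriv_on_continuous _ _ _ _ H eps He) as [dl [Hdl H1]].
  exists dl; split; auto. intros s Hs; apply H1; lra.
Qed.

Section FirstTouch.

Variable n : nat.
Variables z z' : nat -> R -> R.
Variable t0 : R.
Hypothesis t0_nonneg : 0 <= t0.
Hypothesis z_deriv : forall j t, (j < n)%nat -> t0 <= t ->
  deriv_on (fun s => 0 <= s) (z j) t (z' j t).
Hypothesis z_pos_t0 : forall j, (j < n)%nat -> 0 < z j t0.

Lemma positive_near T : t0 <= T -> (forall j, (j < n)%nat -> 0 < z j T) ->
  exists dl, 0 < dl /\ forall j, (j < n)%nat -> forall s, t0 <= s -> Rabs (s - T) < dl -> 0 < z j s.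
Proof.
  intros HT Hpos.
  apply (exists_uniform_small n (fun j dl => forall s, t0 <= s -> Rabs (s - T) < dl -> 0 < z j s)).
  { intros j e e' He' Hj s Hs Hs'. apply Hj; auto; lra. }
  intros j Hj.
  destruct (deriv_on_continuous_right _ _ _ t0 t0_nonneg (z_deriv j T Hj HT) (z j T) (Hpos j Hj))
    as [dl [Hdl H1]].
  exists dl; split; auto. intros s Hs Hs'. specialize (H1 s Hs Hs'). apply Rabs_def2 in H1. lra.
Qed.

(* [T] is the supremum of the times up to which all components stay positive. *)
Lemma first_touch_time t1 i : t0 <= t1 -> (i < n)%nat -> z i t1 <= 0 ->
  exists T, t0 < T /\ (forall s j, t0 <= s < T -> (j < n)%nat -> 0 < z j s) /\
    (forall j, (j < n)%nat -> 0 <= z j T) /\ exists j, (j < n)%nat /\ z j T = 0.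
Proof.
  intros Ht1 Hi Hbad.
  set (E := fun t => t0 <= t <= t1 /\ forall s j, t0 <= s <= t -> (j < n)%nat -> 0 < z j s).
  assert (HE0 : E t0) by (split; [lra | intros s j Hs Hj; replace s with t0 by lra; auto]).
  assert (Hbd : bound E) by (exists t1; intros x [Hx _]; lra).
  destruct (completeness E Hbd (ex_intro _ t0 HE0)) as [T [HTu HTl]].
  assert (HT0 : t0 <= T) by (apply HTu; auto).
  assert (HT1 : T <= t1) by (apply HTl; intros x [Hx _]; lra).
  assert (Hbefore : forall s j, t0 <= s < T -> (j < n)%nat -> 0 < z j s).
  { intros s j Hs Hj. destruct (classic (exists e, E e /\ s < e)) as [[e [[_ He] Hse]]|Hno].
    - apply He; auto; lra.
    - exfalso. assert (T <= s); [| lra]. apply HTl. intros x Hx.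
      apply Rnot_lt_le. intros Hsx. apply Hno. exists x; auto. }
  assert (HatT : forall j, (j < n)%nat -> 0 <= z j T).
  { intros j Hj. destruct (Req_dec T t0) as [->|HTne]; [left; auto |].
    apply Rnot_lt_le. intros Hneg.
    destruct (deriv_on_continuous_right _ _ _ t0 t0_nonneg (z_deriv j T Hj HT0) (- z j T)
                ltac:(lra)) as [dl [Hdl H1]].
    destruct (point_left_of t0 T dl ltac:(lra) Hdl) as [s [Hs Hsl]].
    specialize (H1 s ltac:(lra) ltac:(rewrite Rabs_left; lra)).
    assert (0 < z j s) by (apply Hbefore; auto). apply Rabs_def2 in H1. lra. }
  destruct (classic (exists j, (j < n)%nat /\ z j T = 0)) as [Hz|Hnz].
  - exists T. split; auto. destruct Hz as [j [Hj Hz]].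
    destruct HT0 as [|<-]; auto. specialize (z_pos_t0 j Hj). lra.
  - exfalso.
    assert (Hpos : forall j, (j < n)%nat -> 0 < z j T).
    { intros j Hj. destruct (HatT j Hj) as [|Hz]; auto. exfalso; apply Hnz; eauto. }
    destruct (Req_dec T t1) as [->|HTne]; [specialize (Hpos i Hi); lra |].
    destruct (positive_near T HT0 Hpos) as [dl [Hdl H1]].
    set (T' := Rmin (T + dl / 2) t1).
    assert (HT'1 : T < T') by (unfold T'; apply Rmin_glb_lt; lra).
    assert (HT'2 : T' <= T + dl / 2) by apply Rmin_l.
    assert (E T'); [| assert (T' <= T) by (apply HTu; auto); lra].
    split; [split; [lra | apply Rmin_r] |]. intros s j Hs Hj.
    destruct (Rlt_or_le s T); [apply Hbefore; auto; lra |].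
    apply (H1 j Hj s); [lra |]. rewrite Rabs_right; lra.
Qed.

Lemma first_touch_barrier :
  (forall T i, t0 < T -> (forall j, (j < n)%nat -> 0 <= z j T) ->
     (i < n)%nat -> z i T = 0 -> 0 < z' i T) ->
  forall t i, t0 <= t -> (i < n)%nat -> 0 < z i t.
Proof.
  intros Hpush t1 i Ht1 Hi. apply Rnot_le_lt. intros Hbad.
  destruct (first_touch_time t1 i Ht1 Hi Hbad) as [T [HT [Hbefore [HatT [j [Hj Hz]]]]]].
  destruct (deriv_on_pos_left (z j) T _ ltac:(lra) (z_deriv j T Hj ltac:(lra))
              (Hpush T j HT HatT Hj Hz)) as [dl [Hdl H1]].
  destruct (point_left_of t0 T dl HT Hdl) as [s [Hs Hsl]].
  specialize (H1 s ltac:(lra) ltac:(lra)). assert (0 < z j s) by (apply Hbefore; auto). lra.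
Qed.

End FirstTouch.

Lemma scalar_barrier (z z' : R -> R) t0 :
  0 <= t0 ->
  (forall t, t0 <= t -> deriv_on (fun s => 0 <= s) z t (z' t)) ->
  0 < z t0 ->
  (forall T, t0 < T -> z T = 0 -> 0 < z' T) ->
  forall t, t0 <= t -> 0 < z t.
Proof.
  intros Ht0 Hder H0 Hpush t Ht.
  apply (first_touch_barrier 1 (fun _ => z) (fun _ => z') t0 Ht0 ltac:(auto) ltac:(auto))
    with (i := 0%nat); auto.
Qed.

Lemma exp_le_exp a b : a <= b -> exp a <= exp b.
Proof. intros [H|H]; [left; apply exp_increasing; auto | subst; lra]. Qed.

Lemma exp_eventually_small C g eta :
  0 < g -> 0 < eta -> exists t, 0 <= t /\ C * exp (- g * t) < eta.
Proof.
  intros Hg He. destruct (Rle_or_lt C 0) as [HC|HC].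
  - exists 0. split; [lra |]. pose proof (exp_pos (- g * 0)). nra.
  - set (t := Rmax 0 (ln (C / eta) / g + 1)). exists t. split; [apply Rmax_l |].
    assert (Ht : ln (C / eta) / g + 1 <= t) by apply Rmax_r.
    assert (H1 : - g * t < ln (eta / C)).
    { assert (ln (eta / C) = - ln (C / eta)).
      { rewrite <- ln_Rinv by (apply Rdiv_lt_0_compat; lra). f_equal. field. lra. }
      assert (g * (ln (C / eta) / g + 1) <= g * t) by (apply Rmult_le_compat_l; lra).
      replace (g * (ln (C / eta) / g + 1)) with (ln (C / eta) + g) in * by (field; lra). lra. }
    apply exp_increasing in H1. rewrite exp_ln in H1 by (apply Rdiv_lt_0_compat; lra).
    apply Rmult_lt_compat_l with (r := C) in H1; auto.
    replace (C * (eta / C)) with eta in H1 by (field; lra). lra.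
Qed.

(** * Global solutions of ODEs with bounded Lipschitz right-hand side *)

Definition lipschitz (g : R -> R) (C : R) : Prop :=
  forall s s', Rabs (g s - g s') <= C * Rabs (s - s').

Lemma continuous_of_lipschitz g C : lipschitz g C -> forall s, continuous g s.
Proof.
  intros H s. apply continuity_pt_filterlim.
  unfold continuity_pt, continue_in, limit1_in, limit_in. simpl. unfold Rdist.
  intros eps He. pose proof (Rabs_pos C).
  exists (eps / (Rabs C + 1)). split; [apply Rdiv_lt_0_compat; lra |].
  intros y [_ Hy]. eapply Rle_lt_trans; [apply H |].
  assert (C * Rabs (y - s) <= Rabs C * Rabs (y - s))
    by (apply Rmult_le_compat_r; [apply Rabs_pos | apply Rle_abs]).
  assert (Rabs C * Rabs (y - s) <= Rabs C * (eps / (Rabs C + 1)))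
    by (apply Rmult_le_compat_l; [apply Rabs_pos | lra]).
  assert (Rabs C * (eps / (Rabs C + 1)) < eps).
  { apply Rmult_lt_reg_r with (Rabs C + 1); [lra |].
    replace (Rabs C * (eps / (Rabs C + 1)) * (Rabs C + 1)) with (Rabs C * eps) by (field; lra).
    nra. }
  lra.
Qed.

Lemma lipschitz_minus g1 g2 C1 C2 :
  lipschitz g1 C1 -> lipschitz g2 C2 -> lipschitz (fun s => g1 s - g2 s) (C1 + C2).
Proof.
  intros H1 H2 s s'. specialize (H1 s s'). specialize (H2 s s').
  replace (g1 s - g2 s - (g1 s' - g2 s')) with ((g1 s - g1 s') + - (g2 s - g2 s')) by ring.
  eapply Rle_trans; [apply Rabs_triang |]. rewrite Rabs_Ropp. lra.
Qed.

Lemma lipschitz_abs g C : lipschitz g C -> lipschitz (fun s => Rabs (g s)) C.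
Proof. intros H s s'. eapply Rle_trans; [apply Rabs_triang_inv2 | apply H]. Qed.

(* [RInt] at type [R] itself, so that [ring] and [lra] apply to integrals. *)
Definition integral (g : R -> R) (a b : R) : R := RInt g a b.

Section RealIntegrals.

Variable g : R -> R.
Hypothesis g_cont : forall s, continuous g s.

Lemma ex_RInt_of_continuous a b : ex_RInt g a b.
Proof. apply (ex_RInt_continuous (V:=R_CompleteNormedModule)). auto. Qed.

Lemma integral_Chasles a b c : integral g a b + integral g b c = integral g a c.
Proof. exact (RInt_Chasles (V:=R_CompleteNormedModule) g a b c (ex_RInt_of_continuous a b) (ex_RInt_of_continuous b c)). Qed.

Lemma integral_swap a b : integral g b a = - integral g a b.
Proof. unfold integral. rewrite <- (opp_RInt_swap (V:=R_CompleteNormedModule) g a b (ex_RInt_of_continuous a b)). reflexivity. Qed.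

Lemma abs_integral_le_const a b M :
  a <= b -> (forall t, a <= t <= b -> Rabs (g t) <= M) -> Rabs (integral g a b) <= (b - a) * M.
Proof. intros Hab H. apply abs_RInt_le_const; auto. apply ex_RInt_of_continuous. Qed.

Lemma integral_lipschitz K : (forall s, Rabs (g s) <= K) ->
  forall t t', Rabs (integral g 0 t - integral g 0 t') <= K * Rabs (t - t').
Proof.
  intros Hb t t'. rewrite <- (integral_Chasles 0 t' t).
  replace (integral g 0 t' + integral g t' t - integral g 0 t') with (integral g t' t) by ring.
  rewrite Rmult_comm. destruct (Rle_or_lt t' t) as [H|H].
  - rewrite (Rabs_right (t - t')) by lra. apply abs_integral_le_const; auto.
  - rewrite integral_swap, Rabs_Ropp, (Rabs_left (t - t')) by lra.
    replace (- (t - t')) with (t' - t) by ring. apply abs_integral_le_const; [lra | auto].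
Qed.

End RealIntegrals.

Lemma integral_minus (g1 g2 : R -> R) a b :
  (forall s, continuous g1 s) -> (forall s, continuous g2 s) ->
  integral (fun s => g1 s - g2 s) a b = integral g1 a b - integral g2 a b.
Proof.
  intros H1 H2.
  exact (RInt_minus (V:=R_CompleteNormedModule) g1 g2 a b (ex_RInt_of_continuous g1 H1 a b) (ex_RInt_of_continuous g2 H2 a b)).
Qed.

Lemma abs_integral_le (g b : R -> R) t : 0 <= t ->
  (forall s, continuous g s) -> (forall s, continuous (fun s => Rabs (g s)) s) ->
  (forall s, continuous b s) -> (forall s, 0 < s < t -> Rabs (g s) <= b s) ->
  Rabs (integral g 0 t) <= integral b 0 t.
Proof.
  intros Ht H1 H2 H3 H. eapply Rle_trans; [apply abs_RInt_le; auto; apply ex_RInt_of_continuous; auto |].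
  apply RInt_le; auto; apply ex_RInt_of_continuous; auto.
Qed.

Lemma integral_monomial c m t : integral (fun s => c * s ^ m) 0 t = c * t ^ (S m) / INR (S m).
Proof.
  apply is_RInt_unique.
  replace (c * t ^ S m / INR (S m)) with (minus (c * t ^ S m / INR (S m)) (c * 0 ^ S m / INR (S m))).
  2:{ replace (0 ^ S m) with 0 by (simpl; ring). unfold minus, plus, opp; cbn -[INR pow].
      field. apply not_0_INR; lia. }
  apply (is_RInt_derive (fun s => c * s ^ S m / INR (S m))).
  - intros x _. auto_derive; auto.
    change (match m with 0%nat => 1 | S _ => INR m + 1 end) with (INR (S m)).
    field. apply not_0_INR; lia.
  - intros x _. apply continuity_pt_filterlim. apply derivable_continuous_pt.
    eexists. apply is_derive_Reals. auto_derive; auto.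
Qed.

Lemma Un_cv_const c : Un_cv (fun _ => c) c.
Proof. intros eps He; exists 0%nat; intros; unfold Rdist; rewrite Rminus_diag, Rabs_R0; auto. Qed.

Lemma Un_cv_abs_minus u v a b :
  Un_cv u a -> Un_cv v b -> Un_cv (fun k => Rabs (u k - v k)) (Rabs (a - b)).
Proof.
  intros Hu Hv. apply (continuity_seq Rabs (fun k => u k - v k)); [apply Rcontinuity_abs |].
  apply CV_minus; auto.
Qed.

Lemma Un_cv_le_eventually u l c N :
  Un_cv u l -> (forall k, (N <= k)%nat -> u k <= c) -> l <= c.
Proof.
  intros Hu H. apply Rnot_lt_le; intros Hl. destruct (Hu (l - c) ltac:(lra)) as [M HM].
  specialize (HM (max N M) ltac:(lia)). specialize (H (max N M) ltac:(lia)).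
  unfold Rdist in HM. apply Rabs_def2 in HM. lra.
Qed.

Lemma Un_cv_ge_eventually u l c N :
  Un_cv u l -> (forall k, (N <= k)%nat -> c <= u k) -> c <= l.
Proof.
  intros Hu H. apply Rnot_lt_le; intros Hl. destruct (Hu (c - l) ltac:(lra)) as [M HM].
  specialize (HM (max N M) ltac:(lia)). specialize (H (max N M) ltac:(lia)).
  unfold Rdist in HM. apply Rabs_def2 in HM. lra.
Qed.

Lemma Un_cv_squeeze u v w c :
  (forall k, Rabs (u k - v) <= c * w k) -> Un_cv w 0 -> 0 <= c -> Un_cv u v.
Proof.
  intros H Hw Hc eps He.
  destruct (Hw (eps / (c + 1)) ltac:(apply Rdiv_lt_0_compat; lra)) as [N HN].
  exists N. intros k Hk. specialize (HN k Hk). specialize (H k). unfold Rdist in *.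
  rewrite Rminus_0_r in HN.
  assert (c * w k <= c * (eps / (c + 1)))
    by (apply Rmult_le_compat_l; auto; eapply Rle_trans; [apply Rle_abs | lra]).
  assert (c * (eps / (c + 1)) < eps).
  { apply Rmult_lt_reg_r with (c + 1); [lra |].
    replace (c * (eps / (c + 1)) * (c + 1)) with (c * eps) by (field; lra). nra. }
  lra.
Qed.

Lemma E1_growing x : 0 <= x -> Un_growing (E1 x).
Proof.
  intros Hx m. unfold E1. rewrite tech5.
  assert (0 <= / INR (fact (S m)) * x ^ S m); [| lra].
  apply Rmult_le_pos; [left; apply Rinv_0_lt_compat, INR_fact_lt_0 | apply pow_le; auto].
Qed.

Lemma Rmax0_lipschitz a b : Rabs (Rmax a 0 - Rmax b 0) <= Rabs (a - b).
Proof.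
  unfold Rmax. repeat destruct Rle_dec; apply Rabs_le; split; try (apply Rabs_def2; auto);
    unfold Rabs; destruct Rcase_abs; lra.
Qed.

Section Picard.

Variable n : nat.
Variable F : (nat -> R) -> nat -> R.
Variables K L : R.
Hypothesis K_nonneg : 0 <= K.
Hypothesis L_pos : 0 < L.
Hypothesis F_bounded : forall y i, (i < n)%nat -> Rabs (F y i) <= K.
Hypothesis F_lipschitz :
  forall y z i, (i < n)%nat -> Rabs (F y i - F z i) <= L * vnorm n (vsub y z).
Variable x0 : nat -> R.

Fixpoint picard (k : nat) : R -> nat -> R :=
  match k with
  | O => fun _ => x0
  | S k => fun t i => x0 i + integral (fun s => F (picard k s) i) 0 t
  end.

Lemma F_comp_lipschitz (y : R -> nat -> R) C i : (i < n)%nat ->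
  (forall j s s', (j < n)%nat -> Rabs (y s j - y s' j) <= C * Rabs (s - s')) ->
  lipschitz (fun s => F (y s) i) (L * (INR n * C)).
Proof.
  intros Hi H s s'. eapply Rle_trans; [apply F_lipschitz; auto |].
  replace (L * (INR n * C) * Rabs (s - s')) with (L * (INR n * (C * Rabs (s - s')))) by ring.
  apply Rmult_le_compat_l; [lra |]. apply vnorm_le_of_componentwise. intros; apply H; auto.
Qed.

Lemma picard_lipschitz k i s s' : (i < n)%nat ->
  Rabs (picard k s i - picard k s' i) <= K * Rabs (s - s').
Proof.
  revert i s s'. induction k; intros i s s' Hi; simpl.
  - rewrite Rminus_diag, Rabs_R0. apply Rmult_le_pos; auto; apply Rabs_pos.
  - replace (x0 i + integral (fun s0 => F (picard k s0) i) 0 s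
             - (x0 i + integral (fun s0 => F (picard k s0) i) 0 s'))
      with (integral (fun s0 => F (picard k s0) i) 0 s - integral (fun s0 => F (picard k s0) i) 0 s')
      by ring.
    apply integral_lipschitz; [| intros; apply F_bounded; auto].
    apply (continuous_of_lipschitz _ _ (F_comp_lipschitz _ K i Hi IHk)).
Qed.

Lemma picard_field_lipschitz k i : (i < n)%nat ->
  lipschitz (fun s => F (picard k s) i) (L * (INR n * K)).
Proof. intros Hi. apply F_comp_lipschitz; auto. intros j s s' Hj; apply picard_lipschitz; auto. Qed.

Lemma picard_field_continuous k i s : (i < n)%nat -> continuous (fun s => F (picard k s) i) s.
Proof. intros Hi. exact (continuous_of_lipschitz _ _ (picard_field_lipschitz k i Hi) s). Qed.

Lemma picard_step k t : 0 <= t ->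
  vnorm n (vsub (picard (S k) t) (picard k t))
  <= INR n * K * (INR n * L) ^ k * t ^ (S k) / INR (fact (S k)).
Proof.
  revert t. induction k; intros t Ht.
  - replace (INR n * K * (INR n * L) ^ 0 * t ^ 1 / INR (fact 1)) with (INR n * ((t - 0) * K))
      by (simpl; field).
    apply vnorm_le_of_componentwise. intros i Hi. unfold vsub; simpl picard.
    replace (x0 i + integral (fun _ => F x0 i) 0 t - x0 i) with (integral (fun _ => F x0 i) 0 t) by ring.
    apply abs_integral_le_const; auto.
    intros s. exact (picard_field_continuous 0 i s Hi).
  - set (c := L * (INR n * K * (INR n * L) ^ k / INR (fact (S k)))).
    assert (Hf : INR (fact (S (S k))) = INR (S (S k)) * INR (fact (S k)))
      by (rewrite fact_simpl, mult_INR; auto).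
    assert (Hfk := INR_fact_neq_0 (S k)). assert (HSk : INR (S (S k)) <> 0) by (apply not_0_INR; lia).
    replace (INR n * K * (INR n * L) ^ S k * t ^ S (S k) / INR (fact (S (S k))))
      with (INR n * (c * t ^ S (S k) / INR (S (S k)))) by (unfold c; rewrite Hf; simpl pow; field; auto).
    apply vnorm_le_of_componentwise. intros i Hi. unfold vsub. rewrite <- integral_monomial.
    set (G := fun s => F (picard (S k) s) i - F (picard k s) i).
    assert (HG : lipschitz G (L * (INR n * K) + L * (INR n * K)))
      by (apply lipschitz_minus; apply picard_field_lipschitz; auto).
    replace (picard (S (S k)) t i - picard (S k) t i) with (integral G 0 t).
    2:{ unfold G. rewrite integral_minus by (intros; apply picard_field_continuous; auto).
        simpl. ring. }
    apply abs_integral_le; auto.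
    + apply (continuous_of_lipschitz _ _ HG).
    + apply (continuous_of_lipschitz _ _ (lipschitz_abs _ _ HG)).
    + intros s. apply continuity_pt_filterlim. apply derivable_continuous_pt.
      eexists. apply is_derive_Reals. auto_derive; auto.
    + intros s Hs. unfold G. eapply Rle_trans; [apply F_lipschitz; auto |].
      replace (c * s ^ S k)
        with (L * (INR n * K * (INR n * L) ^ k * s ^ S k / INR (fact (S k)))) by (unfold c; field; auto).
      apply Rmult_le_compat_l; [lra |]. apply IHk. lra.
Qed.

Lemma picard_cauchy_bound t s i k m : 0 <= s <= t -> (i < n)%nat -> (k <= m)%nat ->
  Rabs (picard m s i - picard k s i)
  <= (INR n * K / (INR n * L)) * (E1 (INR n * L * t) m - E1 (INR n * L * t) k).
Proof.
  intros Hs Hi Hkm.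
  assert (HQ : 0 < INR n * L) by (apply Rmult_lt_0_compat; auto; apply lt_0_INR; lia).
  induction m.
  - replace k with 0%nat by lia. rewrite !Rminus_diag, Rabs_R0. lra.
  - destruct (Nat.eq_dec k (S m)) as [->|Hne]; [rewrite !Rminus_diag, Rabs_R0; lra |].
    specialize (IHm ltac:(lia)).
    replace (picard (S m) s i - picard k s i)
      with ((picard (S m) s i - picard m s i) + (picard m s i - picard k s i)) by ring.
    eapply Rle_trans; [apply Rabs_triang |].
    assert (H1 : Rabs (picard (S m) s i - picard m s i)
                 <= INR n * K * (INR n * L) ^ m * t ^ (S m) / INR (fact (S m))).
    { eapply Rle_trans; [apply (vnorm_term n (vsub (picard (S m) s) (picard m s)) i Hi) |].
      eapply Rle_trans; [apply picard_step; lra |].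
      unfold Rdiv. apply Rmult_le_compat_r; [left; apply Rinv_0_lt_compat, INR_fact_lt_0 |].
      apply Rmult_le_compat_l; [| apply pow_incr; lra].
      apply Rmult_le_pos; [apply Rmult_le_pos; [apply pos_INR | lra] | apply pow_le, Rlt_le, HQ]. }
    assert (E : INR n * K * (INR n * L) ^ m * t ^ (S m) / INR (fact (S m)) =
                (INR n * K / (INR n * L)) * (E1 (INR n * L * t) (S m) - E1 (INR n * L * t) m)).
    { unfold E1. rewrite tech5, (Rpow_mult_distr (INR n * L) t (S m)). simpl pow.
      assert (0 < INR n) by (apply lt_0_INR; lia).
      field. repeat split; try apply INR_fact_neq_0; lra. }
    lra.
Qed.

Lemma picard_converges t i : 0 <= t -> (i < n)%nat ->
  exists l, Un_cv (fun k => picard k t i) l.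
Proof.
  intros Ht Hi.
  assert (HQ : 0 < INR n * L) by (apply Rmult_lt_0_compat; auto; apply lt_0_INR; lia).
  set (A := INR n * K / (INR n * L)).
  assert (HA : 0 <= A) by (apply Rmult_le_pos; [apply Rmult_le_pos; [apply pos_INR | lra] |
                                               left; apply Rinv_0_lt_compat; auto]).
  set (x := INR n * L * t).
  assert (HC := CV_Cauchy (E1 x) (exist _ (exp x) (E1_cvg x))).
  enough (Hcc : Cauchy_crit (fun k => picard k t i))
    by (destruct (Rcomplete.R_complete _ Hcc) as [l Hl]; exists l; auto).
  intros eps He. destruct (HC (eps / (A + 1)) ltac:(apply Rdiv_lt_0_compat; lra)) as [N HN].
  exists N. intros a b Ha Hb. specialize (HN a b Ha Hb). unfold Rdist in *.
  assert (Hab : Rabs (picard a t i - picard b t i) <= A * Rabs (E1 x a - E1 x b)).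
  { destruct (le_ge_dec b a) as [Hba|Hba].
    - eapply Rle_trans; [apply (picard_cauchy_bound t t i b a); auto; lra |].
      apply Rmult_le_compat_l; auto. apply Rle_abs.
    - rewrite Rabs_minus_sym, (Rabs_minus_sym (E1 x a)).
      eapply Rle_trans; [apply (picard_cauchy_bound t t i a b); auto; lra |].
      apply Rmult_le_compat_l; auto. apply Rle_abs. }
  assert (A * Rabs (E1 x a - E1 x b) <= A * (eps / (A + 1))) by (apply Rmult_le_compat_l; lra).
  assert (A * (eps / (A + 1)) < eps).
  { apply Rmult_lt_reg_r with (A + 1); [lra |].
    replace (A * (eps / (A + 1)) * (A + 1)) with (A * eps) by (field; lra). nra. }
  lra.
Qed.

(* Extended to negative times by [Rmax t 0] so that the limit is a total function. *)
Definition picard_limit (t : R) (i : nat) : R :=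
  epsilon (inhabits 0) (fun l => Un_cv (fun k => picard k (Rmax t 0) i) l).

Lemma picard_limit_cv t i : (i < n)%nat ->
  Un_cv (fun k => picard k (Rmax t 0) i) (picard_limit t i).
Proof. intros Hi. unfold picard_limit. apply epsilon_spec. apply picard_converges; auto. apply Rmax_r. Qed.

Lemma picard_limit_lipschitz i a b : (i < n)%nat ->
  Rabs (picard_limit a i - picard_limit b i) <= K * Rabs (a - b).
Proof.
  intros Hi.
  apply (Un_cv_le_eventually _ _ _ 0
           (Un_cv_abs_minus _ _ _ _ (picard_limit_cv a i Hi) (picard_limit_cv b i Hi))).
  intros k _. eapply Rle_trans; [apply picard_lipschitz; auto |].
  apply Rmult_le_compat_l; auto. apply Rmax0_lipschitz.
Qed.

Lemma picard_limit_error t s i k : 0 <= s <= t -> (i < n)%nat ->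
  Rabs (picard_limit s i - picard k s i)
  <= (INR n * K / (INR n * L)) * (exp (INR n * L * t) - E1 (INR n * L * t) k).
Proof.
  intros Hs Hi.
  assert (HQ : 0 < INR n * L) by (apply Rmult_lt_0_compat; auto; apply lt_0_INR; lia).
  assert (HA : 0 <= INR n * K / (INR n * L))
    by (apply Rmult_le_pos; [apply Rmult_le_pos; [apply pos_INR | lra] | left; apply Rinv_0_lt_compat; auto]).
  assert (Hcv := picard_limit_cv s i Hi). rewrite Rmax_left in Hcv by lra.
  apply (Un_cv_le_eventually _ _ _ k (Un_cv_abs_minus _ _ _ _ Hcv (Un_cv_const (picard k s i)))).
  intros m Hm. eapply Rle_trans; [apply (picard_cauchy_bound t s i k m); auto |].
  apply Rmult_le_compat_l; auto.
  assert (E1 (INR n * L * t) m <= exp (INR n * L * t)); [| lra].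
  apply growing_ineq; [apply E1_growing; apply Rmult_le_pos; lra | apply E1_cvg].
Qed.

Lemma picard_limit_field_lipschitz i : (i < n)%nat ->
  lipschitz (fun s => F (picard_limit s) i) (L * (INR n * K)).
Proof. intros Hi. apply F_comp_lipschitz; auto. intros j s s' Hj. apply picard_limit_lipschitz; auto. Qed.

Lemma picard_limit_integral_eq t i : 0 <= t -> (i < n)%nat ->
  picard_limit t i = x0 i + integral (fun s => F (picard_limit s) i) 0 t.
Proof.
  intros Ht Hi.
  assert (HQ : 0 < INR n * L) by (apply Rmult_lt_0_compat; auto; apply lt_0_INR; lia).
  set (A := INR n * K / (INR n * L)).
  assert (HA : 0 <= A) by (apply Rmult_le_pos; [apply Rmult_le_pos; [apply pos_INR | lra] |
                                               left; apply Rinv_0_lt_compat; auto]).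
  assert (HG := picard_limit_field_lipschitz i Hi).
  assert (H1 : Un_cv (fun k => picard (S k) t i) (picard_limit t i)).
  { assert (Hc := picard_limit_cv t i Hi). rewrite Rmax_left in Hc by lra.
    intros eps He. destruct (Hc eps He) as [N HN]. exists N. intros k Hk. apply HN. lia. }
  apply (UL_sequence _ _ _ H1).
  apply (Un_cv_squeeze _ _ (fun k => exp (INR n * L * t) - E1 (INR n * L * t) k)
           (t * (L * (INR n * A)))).
  - intros k. simpl picard.
    replace (x0 i + integral (fun s => F (picard k s) i) 0 t
             - (x0 i + integral (fun s => F (picard_limit s) i) 0 t))
      with (integral (fun s => F (picard k s) i - F (picard_limit s) i) 0 t)
      by (rewrite integral_minus; [ring | intros; apply picard_field_continuous; auto |
                                 apply (continuous_of_lipschitz _ _ HG)]).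
    replace (t * (L * (INR n * A)) * (exp (INR n * L * t) - E1 (INR n * L * t) k))
      with ((t - 0) * (L * (INR n * (A * (exp (INR n * L * t) - E1 (INR n * L * t) k))))) by ring.
    apply abs_integral_le_const; auto.
    + apply (continuous_of_lipschitz _ _ (lipschitz_minus _ _ _ _ (picard_field_lipschitz k i Hi) HG)).
    + intros s Hs. eapply Rle_trans; [apply F_lipschitz; auto |]. apply Rmult_le_compat_l; [lra |].
      apply vnorm_le_of_componentwise. intros j Hj. unfold vsub.
      rewrite Rabs_minus_sym. apply picard_limit_error; auto.
  - replace 0 with (exp (INR n * L * t) - exp (INR n * L * t)) by ring.
    apply CV_minus; [apply Un_cv_const | apply E1_cvg].
  - apply Rmult_le_pos; auto. apply Rmult_le_pos; [lra | apply Rmult_le_pos; [apply pos_INR | auto]].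
Qed.

Lemma picard_limit_deriv t i : 0 <= t -> (i < n)%nat ->
  deriv_on (fun s => 0 <= s) (fun s => picard_limit s i) t (F (picard_limit t) i).
Proof.
  intros Ht Hi. set (G := fun s => F (picard_limit s) i).
  assert (HGc := continuous_of_lipschitz _ _ (picard_limit_field_lipschitz i Hi)).
  apply (deriv_on_ext _ (fun s => x0 i + integral G 0 s)).
  - intros y Hy. symmetry. apply picard_limit_integral_eq; auto.
  - symmetry. apply picard_limit_integral_eq; auto.
  - apply deriv_on_of_derivable. change (F (picard_limit t) i) with (G t).
    replace (G t) with (0 + G t) by ring.
    apply (derivable_pt_lim_plus (fun _ => x0 i) (fun s => integral G 0 s));
      [apply derivable_pt_lim_const |].
    apply is_derive_Reals.
    apply (is_derive_RInt (V:=R_CompleteNormedModule) G (fun s => RInt G 0 s) 0 t); auto.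
    apply filter_forall. intros b. apply RInt_correct. apply ex_RInt_of_continuous; auto.
Qed.

Lemma ode_global_solution :
  exists x : R -> nat -> R, (forall i, (i < n)%nat -> x 0 i = x0 i) /\
    (forall t i, 0 <= t -> (i < n)%nat ->
       deriv_on (fun s => 0 <= s) (fun s => x s i) t (F (x t) i)).
Proof.
  exists picard_limit. split.
  - intros i Hi. rewrite picard_limit_integral_eq by (auto; lra).
    unfold integral. rewrite (RInt_point (V:=R_CompleteNormedModule)). unfold zero; simpl. ring.
  - intros t i Ht Hi. apply picard_limit_deriv; auto.
Qed.

End Picard.

Definition clamp01 (x : R) : R := Rmax 0 (Rmin x 1).

Lemma clamp01_I01 x : I01 (clamp01 x).
Proof. unfold clamp01, I01. split; [apply Rmax_l | apply Rmax_lub; [lra | apply Rmin_r]]. Qed.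

Lemma clamp01_id x : I01 x -> clamp01 x = x.
Proof. unfold clamp01, I01; intros. rewrite Rmin_left, Rmax_right; lra. Qed.

Lemma clamp01_neg x : x < 0 -> clamp01 x = 0.
Proof. intros; unfold clamp01. rewrite Rmin_left, Rmax_left; lra. Qed.

Lemma clamp01_gt1 x : 1 < x -> clamp01 x = 1.
Proof. intros; unfold clamp01. rewrite Rmin_right, Rmax_right; lra. Qed.

Lemma clamp01_lipschitz x y : Rabs (clamp01 x - clamp01 y) <= Rabs (x - y).
Proof.
  unfold clamp01, Rmax, Rmin. repeat destruct Rle_dec; apply Rabs_le; split;
    try (apply Rabs_def2; auto); unfold Rabs; destruct Rcase_abs; lra.
Qed.

Definition continuous_within01 (f : R -> R) (c : R) : Prop :=
  forall eps, 0 < eps -> exists dl, 0 < dl /\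
    forall y, I01 y -> Rabs (y - c) < dl -> Rabs (f y - f c) < eps.

Lemma continuity_pt_clamp01 f x :
  continuous_within01 f (clamp01 x) -> continuity_pt (fun y => f (clamp01 y)) x.
Proof.
  intros H. unfold continuity_pt, continue_in, limit1_in, limit_in. simpl. unfold Rdist.
  intros eps He. destruct (H eps He) as [dl [Hdl H1]]. exists dl; split; auto.
  intros y [_ Hy]. apply H1; [apply clamp01_I01 |].
  eapply Rle_lt_trans; [apply clamp01_lipschitz | auto].
Qed.

Lemma derivable_pt_lim_clamp01 f x l : 0 < x < 1 ->
  deriv_on I01 f x l -> derivable_pt_lim (fun y => f (clamp01 y)) x l.
Proof.
  rewrite deriv_on_iff. intros Hx H eps He. destruct (H eps He) as [a [Ha H1]].
  assert (Hp : 0 < Rmin a (Rmin x (1 - x))) by (repeat apply Rmin_glb_lt; lra).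
  exists (mkposreal _ Hp). simpl. intros dx Hdx Hdxl.
  assert (Hh1 : Rabs dx < a) by (eapply Rlt_le_trans; [apply Hdxl | apply Rmin_l]).
  assert (Hh2 : Rabs dx < Rmin x (1 - x)) by (eapply Rlt_le_trans; [apply Hdxl | apply Rmin_r]).
  assert (Hh3 : Rabs dx < x) by (eapply Rlt_le_trans; [apply Hh2 | apply Rmin_l]).
  assert (Hh4 : Rabs dx < 1 - x) by (eapply Rlt_le_trans; [apply Hh2 | apply Rmin_r]).
  apply Rabs_def2 in Hh3. apply Rabs_def2 in Hh4.
  rewrite !clamp01_id by (unfold I01; lra).
  specialize (H1 (x + dx) ltac:(unfold I01; lra) ltac:(lra)
                ltac:(replace (x + dx - x) with dx by ring; auto)).
  replace (x + dx - x) with dx in H1 by ring. auto.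
Qed.

Lemma deriv_on_continuous_within01 f c l : deriv_on I01 f c l -> continuous_within01 f c.
Proof. intros H eps He. exact (deriv_on_continuous _ _ _ _ H eps He). Qed.

Lemma good_h_continuous_within01 hh c : good_h hh -> I01 c -> continuous_within01 hh c.
Proof.
  intros [_ [_ [[Dk [HD0 HD]] _]]] Hc eps He.
  destruct (deriv_on_continuous_within01 _ _ _ (HD 0%nat c Hc) eps He) as [dl [Hdl H1]].
  exists dl; split; auto. intros y Hy Hyc. rewrite <- (HD0 y Hy), <- (HD0 c Hc). auto.
Qed.

Lemma good_h_continuity_pt hh x : good_h hh -> continuity_pt (fun y => hh (clamp01 y)) x.
Proof. intros Hg. apply continuity_pt_clamp01, good_h_continuous_within01, clamp01_I01; auto. Qed.

(* The derivative is continuous on the compact [0,1], hence bounded; then apply the MVT. *)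
Lemma good_h_lipschitz hh : good_h hh -> exists Lh, 0 <= Lh /\
  forall a b, I01 a -> I01 b -> Rabs (hh b - hh a) <= Lh * Rabs (b - a).
Proof.
  intros [_ [_ [[Dk [HD0 HD]] _]]].
  assert (Hc1 : forall y, continuity_pt (fun y => Rabs (Dk 1%nat (clamp01 y))) y).
  { intros y. apply (continuity_pt_clamp01 (fun y => Rabs (Dk 1%nat y))). intros eps He.
    destruct (deriv_on_continuous_within01 _ _ _ (HD 1%nat (clamp01 y) (clamp01_I01 y)) eps He)
      as [dl [Hdl H1]].
    exists dl; split; auto. intros z Hz Hzc. eapply Rle_lt_trans; [apply Rabs_triang_inv2 | auto]. }
  destruct (continuity_ab_maj (fun y => Rabs (Dk 1%nat (clamp01 y))) 0 1 ltac:(lra)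
              (fun c _ => Hc1 c)) as [Mx [HM _]].
  exists (Rabs (Dk 1%nat (clamp01 Mx))). split; [apply Rabs_pos |].
  intros a b Ha Hb. unfold I01 in Ha, Hb.
  assert (0 <= Rmin a b) by (apply Rmin_glb; lra). assert (Rmax a b <= 1) by (apply Rmax_lub; lra).
  destruct (MVT_gen (fun y => Dk 0%nat (clamp01 y)) a b (Dk 1%nat)) as [c [Hc Hmvt]].
  - intros y Hy. apply is_derive_Reals. apply derivable_pt_lim_clamp01; [lra |].
    apply HD. unfold I01; lra.
  - intros y _. apply (continuity_pt_clamp01 (Dk 0%nat)).
    apply (deriv_on_continuous_within01 _ _ _ (HD 0%nat (clamp01 y) (clamp01_I01 y))).
  - rewrite !clamp01_id in Hmvt by (unfold I01; lra).
    rewrite <- (HD0 a), <- (HD0 b), Hmvt, Rabs_mult by (unfold I01; lra).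
    apply Rmult_le_compat_r; [apply Rabs_pos |].
    assert (Hc01 : I01 c) by (unfold I01; lra).
    rewrite <- (clamp01_id c Hc01). apply HM. apply Hc01.
Qed.

(** * A nonnegative subsolution from the spectral abscissa *)

Lemma sum_prod2_le_norms a b c e :
  a * c + b * e <= sqrt (a * a + b * b) * sqrt (c * c + e * e).
Proof.
  rewrite <- sqrt_mult by nra.
  assert (Hs : (a * c + b * e) * (a * c + b * e) <= (a * a + b * b) * (c * c + e * e)).
  { assert (E : (a * a + b * b) * (c * c + e * e) - (a * c + b * e) * (a * c + b * e)
                = (a * e - b * c) * (a * e - b * c)) by ring.
    pose proof (Rle_0_sqr (a * e - b * c)). unfold Rsqr in *. lra. }
  destruct (Rle_or_lt (a * c + b * e) 0).
  { pose proof (sqrt_pos ((a * a + b * b) * (c * c + e * e))); lra. }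
  rewrite <- (sqrt_square (a * c + b * e)) at 1 by lra.
  apply sqrt_le_1; [apply Rle_0_sqr | nra | auto].
Qed.

(* For an eigenpair (lambda, w) of -D + B, the moduli a_k = |w_k| satisfy
   Re(lambda) a_k^2 = Re(conj(w_k) ((-D+B) w)_k) <= a_k ((-D+B) a)_k,
   because the off-diagonal entries are nonnegative. *)
Lemma positive_subsolution n d B :
  (forall i j, (i < n)%nat -> (j < n)%nat -> 0 <= B i j) ->
  (exists s, spectral_abscissa n (mDpB d B) s /\ 0 < s) ->
  exists a r, 0 < r /\ (forall i, (i < n)%nat -> 0 <= a i) /\ (exists i, (i < n)%nat /\ 0 < a i) /\
    forall k, (k < n)%nat -> r * a k <= mv n B a k - d k * a k.
Proof.
  intros HB [s [[_ Hlub] Hs]].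
  assert (Hr : exists r, (exists b, is_eigenvalue n (mDpB d B) r b) /\ 0 < r).
  { apply NNPP; intros Hn. assert (s <= 0); [| lra]. apply Hlub. intros r Hr.
    apply Rnot_lt_le; intros Hr0. apply Hn. exists r; auto. }
  destruct Hr as [r [[b [u [v [[i0 [Hi0 Hnz]] [Hu Hv]]]]] Hr]].
  set (a := fun k => sqrt (u k * u k + v k * v k)).
  exists a, r. split; auto. split; [intros; apply sqrt_pos |]. split.
  { exists i0; split; auto. apply sqrt_lt_R0. destruct Hnz; nra. }
  intros k Hk.
  assert (Ha2 : a k * a k = u k * u k + v k * v k) by (apply sqrt_sqrt; nra).
  assert (Hkey : r * (a k * a k) <= a k * mv n (mDpB d B) a k).
  { replace (r * (a k * a k)) with (u k * mv n (mDpB d B) u k + v k * mv n (mDpB d B) v k)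
      by (rewrite Hu, Hv, Ha2 by auto; ring).
    unfold mv. rewrite <- !vsum_scal, <- vsum_plus. apply vsum_le. intros j Hj.
    unfold mDpB. destruct (Nat.eqb_spec k j) as [->|Hne].
    - replace (u j * ((- d j + B j j) * u j) + v j * ((- d j + B j j) * v j))
        with ((- d j + B j j) * (u j * u j + v j * v j)) by ring.
      rewrite <- Ha2. lra.
    - replace (u k * ((0 + B k j) * u j) + v k * ((0 + B k j) * v j))
        with (B k j * (u k * u j + v k * v j)) by ring.
      replace (a k * ((0 + B k j) * a j)) with (B k j * (a k * a j)) by ring.
      apply Rmult_le_compat_l; auto. apply sum_prod2_le_norms. }
  rewrite mv_mDpB in Hkey by auto.
  destruct (sqrt_pos (u k * u k + v k * v k)) as [Hak|Hak]; fold (a k) in Hak.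
  - apply Rmult_le_reg_l with (a k); auto. nra.
  - rewrite <- Hak, !Rmult_0_r, Rminus_0_r. apply mv_nonneg; auto. intros; apply sqrt_pos.
Qed.

Lemma reach_lt n B i j : reach n B i j -> (i < n)%nat -> (j < n)%nat.
Proof. induction 1; auto. Qed.

Lemma equilibrium_const_solution n d B h e :
  is_equilibrium n d B h e -> is_solution n d B h (fun _ => e).
Proof.
  intros [He Heq] t Ht. split; auto. intros i Hi. rewrite Heq by auto.
  apply deriv_on_of_derivable, derivable_pt_lim_const.
Qed.

Lemma exp_barrier_up_deriv a K g T :
  derivable_pt_lim (fun s => a * (1 + K * exp (- g * s))) T (a * (K * (- g * exp (- g * T)))).
Proof. apply is_derive_Reals. auto_derive; auto. ring. Qed.

Lemma exp_barrier_down_deriv a K g t0 T :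
  derivable_pt_lim (fun s => a * (1 - K * exp (- g * (s - t0)))) T (a * K * g * exp (- g * (T - t0))).
Proof. apply is_derive_Reals. auto_derive; auto. unfold Rminus; ring. Qed.

(* At a node where [X = xs (1 + K e)] touches the upper barrier, the barrier
   decreases faster than the state can grow. *)
Lemma upper_barrier_step d hxs hX xs X Sxs SX K e g :
  0 < d -> 0 <= hxs -> hxs <= hX -> 0 < xs -> X = xs * (1 + K * e) -> X <= 1 ->
  SX <= (1 + K * e) * Sxs -> (d + hxs) * xs = (1 - xs) * Sxs ->
  0 < K -> 0 < e -> g < Sxs -> 0 < g ->
  0 < xs * (K * (- g * e)) - (- (d + hX) * X + (1 - X) * SX).
Proof.
  intros. subst. assert (0 < K * e) by (apply Rmult_lt_0_compat; lra).
  assert (0 < xs * (1 + K * e)) by (apply Rmult_lt_0_compat; lra).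
  assert ((d + hxs) * (xs * (1 + K * e)) <= (d + hX) * (xs * (1 + K * e)))
    by (apply Rmult_le_compat_r; nra).
  assert ((1 - xs * (1 + K * e)) * SX <= (1 - xs * (1 + K * e)) * ((1 + K * e) * Sxs))
    by (apply Rmult_le_compat_l; nra).
  assert (0 < xs * K * e) by (apply Rmult_lt_0_compat; [nra | auto]).
  assert (0 < (xs * K * e) * ((1 + K * e) * Sxs - g)) by (apply Rmult_lt_0_compat; nra).
  assert ((d + hxs) * (xs * (1 + K * e)) = (1 + K * e) * ((1 - xs) * Sxs)) by nra.
  lra.
Qed.

Lemma lower_barrier_step d hxs hX xs X Sxs SX K e g :
  0 < d -> 0 <= hX -> hX <= hxs -> 0 < xs -> X = xs * (1 - K * e) -> 0 <= X <= 1 ->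
  (1 - K * e) * Sxs <= SX -> (d + hxs) * xs = (1 - xs) * Sxs ->
  0 < K -> 0 < e -> g < (1 - K * e) * Sxs ->
  0 < (- (d + hX) * X + (1 - X) * SX) - xs * K * g * e.
Proof.
  intros. subst. assert (0 < K * e) by (apply Rmult_lt_0_compat; lra).
  assert ((d + hX) * (xs * (1 - K * e)) <= (d + hxs) * (xs * (1 - K * e)))
    by (apply Rmult_le_compat_r; nra).
  assert ((1 - xs * (1 - K * e)) * ((1 - K * e) * Sxs) <= (1 - xs * (1 - K * e)) * SX)
    by (apply Rmult_le_compat_l; nra).
  assert (0 < xs * K * e) by (apply Rmult_lt_0_compat; [nra | auto]).
  assert (0 < (xs * K * e) * ((1 - K * e) * Sxs - g)) by (apply Rmult_lt_0_compat; lra).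
  assert ((d + hxs) * (xs * (1 - K * e)) = (1 - K * e) * ((1 - xs) * Sxs)) by nra.
  lra.
Qed.

Section SIS.

Variable n : nat.
Variable d : nat -> R.
Variable B : nat -> nat -> R.
Variable h : nat -> R -> R.
Hypothesis d_pos : forall i, (i < n)%nat -> 0 < d i.
Hypothesis B_nonneg : forall i j, (i < n)%nat -> (j < n)%nat -> 0 <= B i j.
Hypothesis h_good : forall i, (i < n)%nat -> good_h (h i).
Hypothesis B_irreducible : irreducible n B.

Lemma h_nonneg i x : (i < n)%nat -> I01 x -> 0 <= h i x.
Proof. intros Hi. apply (h_good i Hi). Qed.

Lemma h_monotone i x y : (i < n)%nat -> I01 x -> I01 y -> x <= y -> h i x <= h i y.
Proof. intros Hi. apply (h_good i Hi). Qed.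

Lemma h_bounded i : (i < n)%nat -> exists M, 0 <= M /\ forall x, I01 x -> h i x <= M.
Proof.
  intros Hi. destruct (h_good i Hi) as [H0 [[M HM] _]]. exists M. split; auto.
  eapply Rle_trans; [apply (H0 0) | apply HM]; unfold I01; lra.
Qed.

Lemma zerov_equilibrium : is_equilibrium n d B h zerov.
Proof.
  split; [intros i Hi; unfold zerov; lra |].
  intros i Hi. unfold sis_rhs, zerov, mv.
  rewrite (vsum_ext n _ (fun _ => 0)), vsum_zero by (intros; ring). ring.
Qed.

Lemma equilibrium_balance e i : is_equilibrium n d B h e -> (i < n)%nat ->
  (d i + h i (e i)) * e i = (1 - e i) * mv n B e i.
Proof. intros [_ Heq] Hi. specialize (Heq i Hi). unfold sis_rhs in Heq. lra. Qed.

Lemma positivity_propagates (P : nat -> Prop) :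
  (forall i j, (i < n)%nat -> (j < n)%nat -> B i j <> 0 -> P j -> P i) ->
  forall i k, (i < n)%nat -> (k < n)%nat -> P k -> P i.
Proof.
  intros Hstep i k Hi Hk. induction (B_irreducible i k Hi Hk) as [|k' j Hr IH Hj Hb]; auto.
  intros Hj'. apply IH; [eapply reach_lt; eauto |]. apply (Hstep k' j); auto. eapply reach_lt; eauto.
Qed.

Lemma sis_rhs_pos_at_zero y i j : in_Xi n y -> (i < n)%nat -> (j < n)%nat ->
  y i = 0 -> B i j <> 0 -> 0 < y j -> 0 < sis_rhs n d B h y i.
Proof.
  intros Hy Hi Hj Hyi Hb Hyj. unfold sis_rhs. rewrite Hyi.
  assert (0 < B i j) by (destruct (B_nonneg i j Hi Hj); auto; congruence).
  assert (B i j * y j <= mv n B y i) by (apply mv_term; auto; intros; apply Hy; auto).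
  assert (0 < B i j * y j) by (apply Rmult_lt_0_compat; auto).
  lra.
Qed.

Lemma equilibrium_interior e :
  is_equilibrium n d B h e -> ~ veq n e zerov -> in_int_Xi n e.
Proof.
  intros [He Heq] Hnz. destruct (not_veq_zerov n e Hnz) as [k [Hk Hek]].
  assert (Hek0 : 0 < e k) by (destruct (He k Hk) as [[|] _]; auto; congruence).
  intros i Hi. split.
  - apply (positivity_propagates (fun j => 0 < e j)) with k; auto.
    intros i' j Hi' Hj Hb Hej. destruct (He i' Hi') as [[|Hz] _]; auto. exfalso.
    pose proof (sis_rhs_pos_at_zero e i' j He Hi' Hj (eq_sym Hz) Hb Hej).
    rewrite Heq in *; auto. lra.
  - destruct (He i Hi) as [_ [|Hz]]; auto. exfalso. specialize (Heq i Hi).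
    unfold sis_rhs in Heq. rewrite Hz in Heq.
    assert (0 <= h i 1) by (apply h_nonneg; [auto | unfold I01; lra]). specialize (d_pos i Hi). lra.
Qed.

Lemma equilibrium_force_pos e i :
  is_equilibrium n d B h e -> in_int_Xi n e -> (i < n)%nat -> 0 < mv n B e i.
Proof.
  intros He Hint Hi. pose proof (equilibrium_balance e i He Hi) as Hbal.
  specialize (Hint i Hi). specialize (d_pos i Hi).
  assert (0 <= h i (e i)) by (apply h_nonneg; [auto | unfold I01; lra]).
  assert (0 < (d i + h i (e i)) * e i) by (apply Rmult_lt_0_compat; lra).
  apply Rnot_le_lt; intros HS. assert (0 <= (1 - e i) * - mv n B e i) by (apply Rmult_le_pos; lra).
  lra.
Qed.

Lemma solution_pos_of_neighbor x T i j : is_solution n d B h x -> 0 < T ->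
  (i < n)%nat -> (j < n)%nat -> B i j <> 0 -> 0 < x T j -> 0 < x T i.
Proof.
  intros Hsol HT Hi Hj Hb Hxj. destruct (Hsol T ltac:(lra)) as [HxT Hder].
  destruct (HxT i Hi) as [[Hpos|Hz] _]; auto. exfalso.
  destruct (deriv_on_pos_left _ T _ HT (Hder i Hi)
              (sis_rhs_pos_at_zero _ i j HxT Hi Hj (eq_sym Hz) Hb Hxj)) as [dl [Hdl H1]].
  destruct (point_left_of 0 T dl HT Hdl) as [s [Hs Hsl]].
  specialize (H1 s ltac:(lra) ltac:(lra)).
  destruct (Hsol s ltac:(lra)) as [Hxs _]. specialize (Hxs i Hi). lra.
Qed.

Lemma solution_pos_everywhere x T k : is_solution n d B h x -> 0 < T ->
  (k < n)%nat -> 0 < x T k -> forall i, (i < n)%nat -> 0 < x T i.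
Proof.
  intros Hsol HT Hk Hxk i Hi. apply (positivity_propagates (fun j => 0 < x T j)) with k; auto.
  intros i' j Hi' Hj Hb. apply (solution_pos_of_neighbor x T i' j); auto.
Qed.

(* [x_k(0) / 2 * exp(-(d_k + M + 1) t)], with [M] a bound of [h_k], is a strict
   subsolution for node [k]. *)
Lemma solution_pos_persists x k : is_solution n d B h x -> (k < n)%nat -> 0 < x 0 k ->
  forall t, 0 <= t -> 0 < x t k.
Proof.
  intros Hsol Hk H0 t Ht. destruct (h_bounded k Hk) as [M [HM0 HM]].
  set (q := x 0 k / 2). set (c := d k + M + 1).
  assert (Hq : 0 < q) by (unfold q; lra).
  assert (Hqe : 0 < q * exp (- c * t)) by (apply Rmult_lt_0_compat; auto; apply exp_pos).
  enough (0 < x t k - q * exp (- c * t)) by lra.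
  apply (scalar_barrier (fun s => x s k - q * exp (- c * s))
           (fun s => sis_rhs n d B h (x s) k - q * (- c * exp (- c * s))) 0); auto; [lra | | |].
  - intros s Hs. apply deriv_on_minus; [apply (proj2 (Hsol s Hs)); auto |].
    apply deriv_on_of_derivable. apply is_derive_Reals. auto_derive; auto. ring.
  - rewrite Rmult_0_r, exp_0. unfold q; lra.
  - intros T HT Hz. destruct (Hsol T ltac:(lra)) as [HxT _].
    assert (HxTk : x T k = q * exp (- c * T)) by lra.
    assert (0 < x T k) by (rewrite HxTk; apply Rmult_lt_0_compat; auto; apply exp_pos).
    assert (F1 := HxT k Hk).
    assert (h k (x T k) <= M) by (apply HM; unfold I01; lra).
    assert (0 <= mv n B (x T) k) by (apply mv_nonneg; intros; [apply B_nonneg | apply HxT]; auto).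
    replace (q * (- c * exp (- c * T))) with (- c * x T k) by (rewrite HxTk; ring).
    unfold sis_rhs.
    assert ((d k + h k (x T k)) * x T k <= (d k + M) * x T k) by (apply Rmult_le_compat_r; lra).
    assert (0 <= (1 - x T k) * mv n B (x T) k) by (apply Rmult_le_pos; lra).
    unfold c. nra.
Qed.


(** ** Exponential comparison with the endemic equilibrium *)

Section Comparison.

Variable xs : nat -> R.
Hypothesis xs_equilibrium : is_equilibrium n d B h xs.
Hypothesis xs_interior : in_int_Xi n xs.

Lemma solution_upper_comparison c x K g :
  (forall i, (i < n)%nat -> c <= mv n B xs i) ->
  is_solution n d B h x -> 0 < K -> 0 < g -> g < c ->
  (forall i, (i < n)%nat -> x 0 i < xs i * (1 + K)) ->
  forall t i, 0 <= t -> (i < n)%nat -> x t i < xs i * (1 + K * exp (- g * t)).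
Proof.
  intros Hc Hsol HK Hg Hgc H0 t i Ht Hi.
  enough (0 < xs i * (1 + K * exp (- g * t)) - x t i) by lra.
  apply (first_touch_barrier n (fun j s => xs j * (1 + K * exp (- g * s)) - x s j)
           (fun j s => xs j * (K * (- g * exp (- g * s))) - sis_rhs n d B h (x s) j) 0);
    auto; [lra | | |].
  - intros j s Hj Hs. apply deriv_on_minus; [apply deriv_on_of_derivable, exp_barrier_up_deriv |].
    apply (proj2 (Hsol s Hs)); auto.
  - intros j Hj. rewrite Rmult_0_r, exp_0, Rmult_1_r. specialize (H0 j Hj). lra.
  - intros T j HT Hall Hj Hz. destruct (Hsol T ltac:(lra)) as [HxT _].
    assert (Hxsj := xs_interior j Hj). assert (HxTj := HxT j Hj).
    assert (He := exp_pos (- g * T)).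
    assert (0 <= K * exp (- g * T)) by (apply Rmult_le_pos; lra).
    assert (HX : x T j = xs j * (1 + K * exp (- g * T))) by lra.
    apply (upper_barrier_step (d j) (h j (xs j)) (h j (x T j)) (xs j) (x T j)
             (mv n B xs j) (mv n B (x T) j) K (exp (- g * T)) g); auto; try lra.
    + apply h_nonneg; auto; unfold I01; lra.
    + apply h_monotone; auto; unfold I01; nra.
    + rewrite <- mv_scal. apply mv_le; auto. intros l Hl. specialize (Hall l Hl). lra.
    + apply equilibrium_balance; auto.
    + specialize (Hc j Hj); lra.
Qed.

Lemma solution_lower_comparison c x K g t0 :
  (forall i, (i < n)%nat -> c <= mv n B xs i) ->
  is_solution n d B h x -> 0 < K < 1 -> 0 < g -> g < (1 - K) * c -> 0 <= t0 ->
  (forall i, (i < n)%nat -> xs i * (1 - K) < x t0 i) ->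
  forall t i, t0 <= t -> (i < n)%nat -> xs i * (1 - K * exp (- g * (t - t0))) < x t i.
Proof.
  intros Hc Hsol HK Hg Hgc Ht0 H0 t i Ht Hi.
  enough (0 < x t i - xs i * (1 - K * exp (- g * (t - t0)))) by lra.
  apply (first_touch_barrier n (fun j s => x s j - xs j * (1 - K * exp (- g * (s - t0))))
           (fun j s => sis_rhs n d B h (x s) j - xs j * K * g * exp (- g * (s - t0))) t0);
    auto; [| |].
  - intros j s Hj Hs. apply deriv_on_minus; [apply (proj2 (Hsol s ltac:(lra))); auto |].
    apply deriv_on_of_derivable, exp_barrier_down_deriv.
  - intros j Hj. rewrite Rminus_diag, Rmult_0_r, exp_0, Rmult_1_r. specialize (H0 j Hj). lra.
  - intros T j HT Hall Hj Hz. destruct (Hsol T ltac:(lra)) as [HxT _].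
    assert (Hxsj := xs_interior j Hj). assert (HxTj := HxT j Hj).
    assert (He0 := exp_pos (- g * (T - t0))).
    assert (He1 : exp (- g * (T - t0)) <= 1) by (rewrite <- exp_0; apply exp_le_exp; nra).
    set (e := exp (- g * (T - t0))) in *.
    assert (0 <= K * e) by (apply Rmult_le_pos; lra).
    assert (HX : x T j = xs j * (1 - K * e)) by lra.
    apply (lower_barrier_step (d j) (h j (xs j)) (h j (x T j)) (xs j) (x T j)
             (mv n B xs j) (mv n B (x T) j) K e g); auto; try lra.
    + apply h_nonneg; auto; unfold I01; lra.
    + apply h_monotone; auto; unfold I01; nra.
    + rewrite <- mv_scal. apply mv_le; auto. intros l Hl. specialize (Hall l Hl). lra.
    + apply equilibrium_balance; auto.
    + specialize (Hc j Hj).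
      assert (0 <= c) by nra.
      assert ((1 - K) * c <= (1 - K * e) * mv n B xs j) by (apply Rmult_le_compat; nra).
      lra.
Qed.

Lemma equilibrium_bounds_pos :
  exists m c, 0 < m /\ 0 < c /\
    (forall i, (i < n)%nat -> m <= xs i) /\ (forall i, (i < n)%nat -> c <= mv n B xs i).
Proof.
  destruct (exists_pos_lower_bound n xs) as [m [Hm Hmi]]; [intros; apply xs_interior; auto |].
  destruct (exists_pos_lower_bound n (fun i => mv n B xs i)) as [c [Hc Hci]].
  { intros; apply equilibrium_force_pos; auto. }
  exists m, c. auto.
Qed.

Lemma exp_rate_le g g' t : g' <= g -> 0 <= t -> exp (- g * t) <= exp (- g' * t).
Proof. intros Hg Ht. apply exp_le_exp. nra. Qed.

(* Every state lies below the barrier [xs (1 + 1/m)], since [xs >= m] and [x <= 1]. *)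
Lemma solution_exp_upper x : is_solution n d B h x ->
  exists C g, 0 <= C /\ 0 < g /\
    forall t i, 0 <= t -> (i < n)%nat -> x t i - xs i <= C * exp (- g * t).
Proof.
  intros Hsol. destruct equilibrium_bounds_pos as [m [c [Hm [Hc [Hmi Hci]]]]].
  assert (Hm1 : 0 < 1 / m) by (apply Rdiv_lt_0_compat; lra).
  exists (1 / m), (c / 2). split; [lra | split; [lra |]]. intros t i Ht Hi.
  assert (Hup := solution_upper_comparison c x (1 / m) (c / 2) Hci Hsol Hm1
                   ltac:(lra) ltac:(lra)).
  assert (U := Hup ltac:(intros j Hj; destruct (Hsol 0 ltac:(lra)) as [Hx0 _];
                         specialize (Hmi j Hj); specialize (Hx0 j Hj);
                         assert (1 <= xs j * (1 / m)) by
                           (apply Rmult_le_reg_r with m; auto; field_simplify; lra);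
                         lra) t i Ht Hi).
  assert (Hxs := xs_interior i Hi).
  assert (0 <= 1 / m * exp (- (c / 2) * t)) by (apply Rmult_le_pos; [lra | left; apply exp_pos]).
  assert (xs i * (1 / m * exp (- (c / 2) * t)) <= 1 * (1 / m * exp (- (c / 2) * t)))
    by (apply Rmult_le_compat_r; lra).
  lra.
Qed.

(* From time 1 on the solution is positive: with [p = min_i x_i(1)] it starts above
   the lower barrier [xs (1 - (1 - p/2) e^{-g (t - 1)})]. *)
Lemma solution_exp_lower x : is_solution n d B h x -> ~ veq n (x 0) zerov ->
  exists C g, 0 <= C /\ 0 < g /\
    forall t i, 0 <= t -> (i < n)%nat -> xs i - x t i <= C * exp (- g * t).
Proof.
  intros Hsol Hnz. destruct (not_veq_zerov n _ Hnz) as [k [Hk Hxk]].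
  destruct (Hsol 0 ltac:(lra)) as [Hx0 _].
  assert (Hxk0 : 0 < x 0 k) by (destruct (Hx0 k Hk) as [[|] _]; auto; congruence).
  assert (Hx1 := solution_pos_everywhere x 1 k Hsol ltac:(lra) Hk
                   (solution_pos_persists x k Hsol Hk Hxk0 1 ltac:(lra))).
  destruct (exists_pos_lower_bound n (fun i => x 1 i) Hx1) as [p [Hp Hpi]].
  assert (Hp1 : p <= 1) by (specialize (Hpi k Hk); destruct (Hsol 1 ltac:(lra)) as [HX1 _];
                           specialize (HX1 k Hk); lra).
  destruct equilibrium_bounds_pos as [m [c [Hm [Hc [Hmi Hci]]]]].
  set (g := p * c / 4). assert (Hg : 0 < g) by (unfold g; nra).
  exists (exp g), g. split; [left; apply exp_pos | split; auto]. intros t i Ht Hi.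
  assert (Hxs := xs_interior i Hi).
  assert (E : exp g * exp (- g * t) = exp (- g * (t - 1))) by (rewrite <- exp_plus; f_equal; ring).
  rewrite E. destruct (Rle_or_lt 1 t) as [Ht1|Ht1].
  - assert (L := solution_lower_comparison c x (1 - p / 2) g 1 Hci Hsol ltac:(lra) Hg
                   ltac:(unfold g; nra) ltac:(lra)
                   ltac:(intros j Hj; specialize (Hpi j Hj); specialize (xs_interior j Hj); nra)
                   t i Ht1 Hi).
    assert (0 < exp (- g * (t - 1))) by apply exp_pos.
    set (e := exp (- g * (t - 1))) in *.
    assert (0 <= (1 - p / 2) * e <= e) by nra.
    nra.
  - assert (1 <= exp (- g * (t - 1))) by (rewrite <- exp_0 at 1; apply exp_le_exp;
                                               assert (0 <= g * (1 - t)) by (apply Rmult_le_pos; lra); lra).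
    destruct (Hsol t Ht) as [HXt _]. specialize (HXt i Hi). lra.
Qed.

Lemma solution_exp_convergence x : is_solution n d B h x -> ~ veq n (x 0) zerov ->
  exists C g, 0 < g /\ forall t, 0 <= t -> vnorm n (vsub (x t) xs) <= C * exp (- g * t).
Proof.
  intros Hsol Hnz.
  destruct (solution_exp_upper x Hsol) as [C1 [g1 [HC1 [Hg1 Hup]]]].
  destruct (solution_exp_lower x Hsol Hnz) as [C2 [g2 [HC2 [Hg2 Hlo]]]].
  set (g := Rmin g1 g2). assert (Hg : 0 < g) by (apply Rmin_glb_lt; auto).
  exists (INR n * (C1 + C2)), g. split; auto. intros t Ht.
  rewrite Rmult_assoc. apply vnorm_le_of_componentwise. intros i Hi. unfold vsub.
  assert (exp (- g1 * t) <= exp (- g * t)) by (apply exp_rate_le; auto; apply Rmin_l).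
  assert (exp (- g2 * t) <= exp (- g * t)) by (apply exp_rate_le; auto; apply Rmin_r).
  specialize (Hup t i Ht Hi). specialize (Hlo t i Ht Hi).
  assert (C1 * exp (- g1 * t) <= C1 * exp (- g * t)) by (apply Rmult_le_compat_l; auto).
  assert (C2 * exp (- g2 * t) <= C2 * exp (- g * t)) by (apply Rmult_le_compat_l; auto).
  assert (0 <= C1 * exp (- g * t)) by (apply Rmult_le_pos; auto; left; apply exp_pos).
  assert (0 <= C2 * exp (- g * t)) by (apply Rmult_le_pos; auto; left; apply exp_pos).
  apply Rabs_le. lra.
Qed.

Lemma solution_stays_close x m c : is_solution n d B h x ->
  0 < m -> (forall i, (i < n)%nat -> m <= xs i) ->
  0 < c -> (forall i, (i < n)%nat -> c <= mv n B xs i) ->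
  vnorm n (vsub (x 0) xs) / m < 1 / 4 ->
  forall t i, 0 <= t -> (i < n)%nat ->
    Rabs (x t i - xs i) <= vnorm n (vsub (x 0) xs) / m * exp (- (c / 4) * t).
Proof.
  intros Hsol Hm Hmi Hc Hci HV t i Ht Hi. set (V0 := vnorm n (vsub (x 0) xs)) in *.
  assert (HV0 : 0 <= V0 / m) by (apply Rmult_le_pos; [apply vnorm_nonneg | left; apply Rinv_0_lt_compat; lra]).
  assert (Hee := exp_pos (- (c / 4) * t)).
  assert (He1 : exp (- (c / 4) * t) <= 1) by (rewrite <- exp_0; apply exp_le_exp; nra).
  assert (Hxs := xs_interior i Hi).
  apply Rle_plus_epsilon. intros eps Heps.
  set (K := V0 / m + Rmin eps (1 / 8)).
  assert (Hmin : 0 < Rmin eps (1 / 8) <= eps) by (split; [apply Rmin_glb_lt; lra | apply Rmin_l]).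
  assert (Hmin' : Rmin eps (1 / 8) <= 1 / 8) by apply Rmin_r.
  assert (HK : 0 < K < 1 / 2) by (unfold K; lra).
  assert (Hpre : forall j, (j < n)%nat -> Rabs (x 0 j - xs j) < xs j * K).
  { intros j Hj. assert (Rabs (x 0 j - xs j) <= V0) by apply (vnorm_term n (vsub (x 0) xs) j Hj).
    assert (V0 <= xs j * (V0 / m)).
    { replace V0 with (m * (V0 / m)) at 1 by (field; lra). apply Rmult_le_compat_r; auto. }
    assert (0 < xs j * Rmin eps (1 / 8)) by (apply Rmult_lt_0_compat; [exact (proj1 (xs_interior j Hj)) | lra]).
    unfold K. lra. }
  assert (U := solution_upper_comparison c x K (c / 4) Hci Hsol ltac:(lra) ltac:(lra) ltac:(lra)
                 ltac:(intros j Hj; specialize (Hpre j Hj); apply Rabs_def2 in Hpre; lra) t i Ht Hi).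
  assert (L := solution_lower_comparison c x K (c / 4) 0 Hci Hsol ltac:(lra) ltac:(lra) ltac:(nra)
                 ltac:(lra) ltac:(intros j Hj; specialize (Hpre j Hj); apply Rabs_def2 in Hpre; lra)
                 t i Ht Hi).
  rewrite Rminus_0_r in L.
  assert (xs i * (K * exp (- (c / 4) * t)) <= K * exp (- (c / 4) * t))
    by (assert (0 <= K * exp (- (c / 4) * t)) by (apply Rmult_le_pos; lra); nra).
  assert (K * exp (- (c / 4) * t) <= V0 / m * exp (- (c / 4) * t) + eps) by (unfold K; nra).
  apply Rabs_le; lra.
Qed.

Lemma equilibrium_loc_exp_stable : (0 < n)%nat -> loc_exp_stable n d B h xs.
Proof.
  intros Hn. destruct equilibrium_bounds_pos as [m [c [Hm [Hc [Hmi Hci]]]]].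
  assert (HnR : 0 < INR n) by (apply lt_0_INR; auto).
  exists (m / 4), (INR n / m), (c / 4).
  split; [lra | split; [apply Rdiv_lt_0_compat; lra | split; [lra |]]].
  intros x Hsol HV t Ht.
  replace (INR n / m * exp (- (c / 4) * t) * vnorm n (vsub (x 0) xs))
    with (INR n * (vnorm n (vsub (x 0) xs) / m * exp (- (c / 4) * t))) by (field; lra).
  apply vnorm_le_of_componentwise. intros i Hi.
  apply (solution_stays_close x m c); auto.
  apply Rmult_lt_reg_r with m; auto. field_simplify; lra.
Qed.

Lemma endemic_equilibrium_unique e :
  is_equilibrium n d B h e -> ~ veq n e zerov -> veq n e xs.
Proof.
  intros He Hnz.
  destruct (solution_exp_convergence (fun _ => e) (equilibrium_const_solution _ _ _ _ _ He) Hnz)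
    as [C [g [Hg H]]].
  assert (Hv : vnorm n (vsub e xs) = 0).
  { destruct (vnorm_nonneg n (vsub e xs)) as [Hp|Hp]; auto. exfalso.
    destruct (exp_eventually_small C g _ Hg Hp) as [t [Ht Ht']]. specialize (H t Ht). lra. }
  intros i Hi. assert (Hq := vnorm_term n (vsub e xs) i Hi). rewrite Hv in Hq. unfold vsub in Hq.
  assert (Rabs (e i - xs i) = 0) by (pose proof (Rabs_pos (e i - xs i)); lra).
  apply Rabs_eq_0 in H0. lra.
Qed.

Lemma zerov_unstable : (0 < n)%nat ->
  (forall x0, in_Xi n x0 -> exists x, is_solution n d B h x /\ forall i, (i < n)%nat -> x 0 i = x0 i) ->
  unstable n d B h zerov.
Proof.
  intros Hn Hex.
  assert (Hvx : 0 < vnorm n xs).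
  { eapply Rlt_le_trans; [| apply (vnorm_term n xs 0%nat Hn)].
    rewrite Rabs_right; [apply xs_interior; auto | left; apply xs_interior; auto]. }
  exists (vnorm n xs / 2). split; [lra |]. intros delta Hdel.
  assert (HnR : 0 < INR n) by (apply lt_0_INR; auto).
  set (q := Rmin (delta / (2 * INR n)) (1 / 2)).
  assert (Hq0 : 0 < q) by (apply Rmin_glb_lt; [apply Rdiv_lt_0_compat |]; lra).
  assert (Hq1 : q <= 1 / 2) by apply Rmin_r.
  assert (Hq2 : q <= delta / (2 * INR n)) by apply Rmin_l.
  destruct (Hex (fun _ => q)) as [x [Hsol H0]]; [intros i Hi; lra |].
  exists x. split; auto. split.
  - eapply Rle_lt_trans.
    { apply vnorm_le_of_componentwise with (c := q). intros i Hi. unfold vsub, zerov.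
      rewrite H0, Rminus_0_r, Rabs_right by (auto; lra). lra. }
    assert (INR n * q <= INR n * (delta / (2 * INR n))) by (apply Rmult_le_compat_l; lra).
    replace (INR n * (delta / (2 * INR n))) with (delta / 2) in * by (field; lra). lra.
  - assert (Hnz : ~ veq n (x 0) zerov).
    { intros Hv. specialize (Hv 0%nat Hn). rewrite H0 in Hv by auto. unfold zerov in Hv. lra. }
    destruct (solution_exp_convergence x Hsol Hnz) as [C [g [Hg H]]].
    destruct (exp_eventually_small C g (vnorm n xs / 2) Hg ltac:(lra)) as [t [Ht Ht']].
    exists t. split; auto. specialize (H t Ht).
    assert (vnorm n (vsub zerov xs) <= vnorm n (vsub zerov (x t)) + vnorm n (vsub (x t) xs))
      by apply vnorm_sub_triangle.
    assert (E1 : vnorm n (vsub zerov xs) = vnorm n xs).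
    { apply vsum_ext. intros i _. unfold vsub, zerov. rewrite Rminus_0_l. apply Rabs_Ropp. }
    assert (E2 : vnorm n (vsub zerov (x t)) = vnorm n (vsub (x t) zerov)).
    { apply vsum_ext. intros i _. unfold vsub. apply Rabs_minus_sym. }
    lra.
Qed.

End Comparison.


(** ** Existence of solutions *)

(* Outside [Xi_n] the field is extended by clamping each coordinate to [0, 1],
   which makes it globally bounded and Lipschitz. *)
Definition sis_rhs_clamped (y : nat -> R) (i : nat) : R :=
  sis_rhs n d B h (fun j => clamp01 (y j)) i.

Lemma sis_rhs_clamped_id y i : in_Xi n y -> (i < n)%nat ->
  sis_rhs_clamped y i = sis_rhs n d B h y i.
Proof.
  intros Hy Hi. unfold sis_rhs_clamped, sis_rhs. rewrite clamp01_id by (apply Hy; auto).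
  do 2 f_equal. apply vsum_ext. intros j Hj. rewrite clamp01_id by (apply Hy; auto). auto.
Qed.

Lemma clamped_force_bounds y i : (i < n)%nat ->
  0 <= mv n B (fun j => clamp01 (y j)) i <= mv n B (fun _ => 1) i.
Proof.
  intros Hi. split; [apply mv_nonneg; auto; intros; apply clamp01_I01 |].
  apply mv_le; auto. intros; apply clamp01_I01.
Qed.

Lemma clamped_force_lipschitz y z i : (i < n)%nat ->
  Rabs (mv n B (fun j => clamp01 (y j)) i - mv n B (fun j => clamp01 (z j)) i)
  <= mv n B (fun _ => 1) i * vnorm n (vsub y z).
Proof.
  intros Hi. rewrite mv_minus. eapply Rle_trans; [apply vsum_abs |].
  unfold mv. rewrite Rmult_comm, <- vsum_scal. apply vsum_le. intros j Hj.
  rewrite Rabs_mult, (Rabs_right (B i j)) by (apply Rle_ge, B_nonneg; auto).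
  rewrite Rmult_1_r, (Rmult_comm (vnorm n (vsub y z))). apply Rmult_le_compat_l; auto.
  eapply Rle_trans; [apply clamp01_lipschitz | apply (vnorm_term n (vsub y z) j Hj)].
Qed.

Lemma sis_rhs_clamped_bounded :
  exists K, 0 < K /\ forall i, (i < n)%nat -> forall y, Rabs (sis_rhs_clamped y i) <= K.
Proof.
  apply (exists_uniform_large n (fun i c => forall y, Rabs (sis_rhs_clamped y i) <= c)).
  { intros j e e' He H y. specialize (H y). lra. }
  intros i Hi. destruct (h_bounded i Hi) as [M [HM0 HM]].
  exists (d i + M + mv n B (fun _ => 1) i). intros y. unfold sis_rhs_clamped, sis_rhs.
  assert (Hc := clamp01_I01 (y i)). assert (Hhc := HM _ Hc). assert (Hh0 := h_nonneg i _ Hi Hc).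
  assert (HS := clamped_force_bounds y i Hi). specialize (d_pos i Hi). unfold I01 in Hc.
  assert (0 <= (d i + h i (clamp01 (y i))) * clamp01 (y i) <= d i + M) by (split; nra).
  assert (0 <= (1 - clamp01 (y i)) * mv n B (fun j => clamp01 (y j)) i <= mv n B (fun _ => 1) i)
    by (split; nra).
  apply Rabs_le; lra.
Qed.

Lemma Rabs_sum5 a b c e f :
  Rabs (- a - b - c + e + f) <= Rabs a + Rabs b + Rabs c + Rabs e + Rabs f.
Proof. unfold Rabs; repeat destruct Rcase_abs; lra. Qed.

Lemma sis_rhs_clamped_lipschitz : exists L, 0 < L /\
  forall i, (i < n)%nat -> forall y z,
    Rabs (sis_rhs_clamped y i - sis_rhs_clamped z i) <= L * vnorm n (vsub y z).
Proof.
  apply (exists_uniform_large n (fun i c => forall y z,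
           Rabs (sis_rhs_clamped y i - sis_rhs_clamped z i) <= c * vnorm n (vsub y z))).
  { intros j e e' He H y z. specialize (H y z). pose proof (vnorm_nonneg n (vsub y z)). nra. }
  intros i Hi. destruct (h_bounded i Hi) as [M [HM0 HM]].
  destruct (good_h_lipschitz (h i) (h_good i Hi)) as [Lh [HLh0 HLh]].
  set (Bs := mv n B (fun _ => 1) i).
  exists (d i + M + Lh + 2 * Bs). intros y z. unfold sis_rhs_clamped, sis_rhs.
  set (u := clamp01 (y i)). set (w := clamp01 (z i)). set (V := vnorm n (vsub y z)).
  set (S := mv n B (fun j => clamp01 (y j)) i). set (S' := mv n B (fun j => clamp01 (z j)) i).
  assert (Hu := clamp01_I01 (y i)). assert (Hw := clamp01_I01 (z i)).
  fold u in Hu. fold w in Hw.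
  assert (HV0 : 0 <= V) by apply vnorm_nonneg.
  assert (Huw : Rabs (u - w) <= V).
  { eapply Rle_trans; [apply clamp01_lipschitz | apply (vnorm_term n (vsub y z) i Hi)]. }
  assert (HSS : Rabs (S - S') <= Bs * V) by (apply clamped_force_lipschitz; auto).
  assert (HS' := clamped_force_bounds z i Hi). fold S' Bs in HS'.
  assert (Hhu := HM u Hu). assert (Hhw := HM w Hw). assert (Hlh := HLh w u Hw Hu).
  assert (Hh0 := h_nonneg i u Hi Hu). specialize (d_pos i Hi). unfold I01 in Hu, Hw.
  replace (- (d i + h i u) * u + (1 - u) * S - (- (d i + h i w) * w + (1 - w) * S'))
    with (- (d i * (u - w)) - (h i u * (u - w)) - ((h i u - h i w) * w)
          + ((1 - u) * (S - S')) + ((w - u) * S')) by ring.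
  eapply Rle_trans; [apply Rabs_sum5 |]. rewrite !Rabs_mult.
  assert (Rabs (d i) * Rabs (u - w) <= d i * V)
    by (rewrite Rabs_right by lra; apply Rmult_le_compat_l; lra).
  assert (Rabs (h i u) * Rabs (u - w) <= M * V)
    by (apply Rmult_le_compat; try apply Rabs_pos; auto; rewrite Rabs_right; lra).
  assert (Rabs (h i u - h i w) * Rabs w <= Lh * V).
  { rewrite (Rabs_right w) by lra. replace (Lh * V) with (Lh * V * 1) by ring.
    apply Rmult_le_compat; try apply Rabs_pos; try lra.
    eapply Rle_trans; [apply Hlh | apply Rmult_le_compat_l; auto]. }
  assert (Rabs (1 - u) * Rabs (S - S') <= Bs * V)
    by (rewrite <- (Rmult_1_l (Bs * V)); apply Rmult_le_compat; try apply Rabs_pos; auto;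
        rewrite Rabs_right; lra).
  assert (Rabs (w - u) * Rabs S' <= V * Bs)
    by (apply Rmult_le_compat; try apply Rabs_pos; [rewrite Rabs_minus_sym; auto |
                                                    rewrite Rabs_right; lra]).
  lra.
Qed.

Section ClampedSolution.

Variable x : R -> nat -> R.
Hypothesis x0_in_Xi : in_Xi n (x 0).
Hypothesis x_deriv : forall t i, 0 <= t -> (i < n)%nat ->
  deriv_on (fun s => 0 <= s) (fun s => x s i) t (sis_rhs_clamped (x t) i).

(* [x_i + e (1 + s)] stays positive, as the clamped field is nonnegative wherever [x_i < 0]. *)
Lemma clamped_solution_nonneg t i : 0 <= t -> (i < n)%nat -> 0 <= x t i.
Proof.
  intros Ht Hi. apply Rnot_lt_le. intros Hneg.
  set (e := - x t i / (2 * (1 + t))). assert (He : 0 < e) by (unfold e; apply Rdiv_lt_0_compat; lra).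
  assert (Hz : 0 < x t i + e * (1 + t)).
  { apply (scalar_barrier (fun s => x s i + e * (1 + s)) (fun s => sis_rhs_clamped (x s) i + e) 0);
      auto; [lra | | |].
    - intros s Hs. apply (deriv_on_plus _ (fun s => x s i) (fun s => e * (1 + s))); [apply x_deriv; auto |].
      apply deriv_on_of_derivable. apply is_derive_Reals. auto_derive; auto. ring.
    - specialize (x0_in_Xi i Hi). lra.
    - intros T HT HzT. assert (HxT : x T i < 0) by nra.
      unfold sis_rhs_clamped, sis_rhs. rewrite clamp01_neg by auto.
      pose proof (clamped_force_bounds (x T) i Hi). lra. }
  unfold e in Hz. replace (x t i + - x t i / (2 * (1 + t)) * (1 + t)) with (x t i / 2) in Hz
    by (field; lra). lra.
Qed.

Lemma clamped_solution_le1 t i : 0 <= t -> (i < n)%nat -> x t i <= 1.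
Proof.
  intros Ht Hi. apply Rnot_lt_le. intros Hbig.
  set (e := (x t i - 1) / (2 * (1 + t))). assert (He : 0 < e) by (unfold e; apply Rdiv_lt_0_compat; lra).
  assert (Hz : 0 < 1 + e * (1 + t) - x t i).
  { apply (scalar_barrier (fun s => 1 + e * (1 + s) - x s i) (fun s => e - sis_rhs_clamped (x s) i) 0);
      auto; [lra | | |].
    - intros s Hs. apply (deriv_on_minus _ (fun s => 1 + e * (1 + s)) (fun s => x s i));
        [| apply x_deriv; auto].
      apply deriv_on_of_derivable. apply is_derive_Reals. auto_derive; auto. ring.
    - specialize (x0_in_Xi i Hi). lra.
    - intros T HT HzT. assert (HxT : 1 < x T i) by nra.
      unfold sis_rhs_clamped, sis_rhs. rewrite clamp01_gt1 by auto.
      assert (0 <= h i 1) by (apply h_nonneg; [auto | unfold I01; lra]). specialize (d_pos i Hi). lra. }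
  unfold e in Hz. replace (1 + (x t i - 1) / (2 * (1 + t)) * (1 + t) - x t i) with ((1 - x t i) / 2) in Hz
    by (field; lra). lra.
Qed.

Lemma clamped_solution_is_solution : is_solution n d B h x.
Proof.
  intros t Ht.
  assert (HX : in_Xi n (x t))
    by (intros i Hi; split; [apply clamped_solution_nonneg | apply clamped_solution_le1]; auto).
  split; auto. intros i Hi. rewrite <- sis_rhs_clamped_id by auto. apply x_deriv; auto.
Qed.

End ClampedSolution.

Lemma exists_solution x0 : in_Xi n x0 ->
  exists x, is_solution n d B h x /\ forall i, (i < n)%nat -> x 0 i = x0 i.
Proof.
  intros Hx0. destruct sis_rhs_clamped_bounded as [K [HK HKb]].
  destruct sis_rhs_clamped_lipschitz as [L [HL HLl]].
  destruct (ode_global_solution n sis_rhs_clamped K L ltac:(lra) HL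
                (fun y i Hi => HKb i Hi y) (fun y z i Hi => HLl i Hi y z) x0) as [x [H0 Hder]].
  exists x. split; auto. apply clamped_solution_is_solution; auto.
  intros i Hi. rewrite H0; auto.
Qed.


(** ** Existence of an endemic equilibrium *)

(* [node_balance d_i h_i S z = 0] says that node [i] with state [z] and incoming
   infection force [S] is at rest: [-(d_i + h_i z) z + (1 - z) S = 0]. *)
Definition node_balance (di : R) (hi : R -> R) (S z : R) : R :=
  z * (di + hi (clamp01 z) + S) - S.

Lemma node_balance_continuous di hi S : good_h hi -> continuity (node_balance di hi S).
Proof.
  intros Hg x. unfold node_balance.
  apply (continuity_pt_minus (fun z => z * (di + hi (clamp01 z) + S)) (fun _ => S));
    [| apply continuity_pt_const; intros ? ?; auto].
  apply (continuity_pt_mult (fun z => z) (fun z => di + hi (clamp01 z) + S));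
    [apply derivable_continuous_pt, derivable_pt_id |].
  apply (continuity_pt_plus (fun z => di + hi (clamp01 z)) (fun _ => S));
    [| apply continuity_pt_const; intros ? ?; auto].
  apply (continuity_pt_plus (fun _ => di) (fun z => hi (clamp01 z)));
    [apply continuity_pt_const; intros ? ?; auto | apply good_h_continuity_pt; auto].
Qed.

Lemma node_balance_root di hi S : 0 < di -> good_h hi -> 0 <= S ->
  exists z, 0 <= z <= 1 /\ node_balance di hi S z = 0.
Proof.
  intros Hd Hg HS. assert (0 <= hi (clamp01 1)) by (apply Hg; apply clamp01_I01).
  destruct (IVT_cor (node_balance di hi S) 0 1 (node_balance_continuous di hi S Hg) ltac:(lra))
    as [z [Hz Hz']]; [unfold node_balance; nra |].
  exists z; auto.
Qed.

Definition node_equilibrium (di : R) (hi : R -> R) (S : R) : R :=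
  epsilon (inhabits 0) (fun z => 0 <= z <= 1 /\ node_balance di hi S z = 0).

Lemma node_equilibrium_spec di hi S : 0 < di -> good_h hi -> 0 <= S ->
  0 <= node_equilibrium di hi S <= 1 /\ node_balance di hi S (node_equilibrium di hi S) = 0.
Proof. intros Hd Hg HS. unfold node_equilibrium. apply epsilon_spec, node_balance_root; auto. Qed.

Lemma node_balance_comparison di hi S S' y z : 0 < di -> good_h hi -> 0 <= S <= S' ->
  0 <= y <= 1 -> 0 <= z <= 1 ->
  node_balance di hi S y <= 0 -> node_balance di hi S' z = 0 -> y <= z.
Proof.
  intros Hd [Hh0 [_ [_ [Hmono _]]]] HS Hy Hz Hpy Hpz. apply Rnot_lt_le. intros Hzy.
  unfold node_balance in *. rewrite clamp01_id in * by (unfold I01; lra).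
  assert (hi z <= hi y) by (apply Hmono; unfold I01; lra).
  assert (0 <= hi z) by (apply Hh0; unfold I01; lra).
  assert (y * S' - S' <= y * S - S) by nra.
  assert (z * (di + hi z + S') < y * (di + hi z + S')) by (apply Rmult_lt_compat_r; lra).
  assert (y * (di + hi z + S') <= y * (di + hi y + S')) by (apply Rmult_le_compat_l; lra).
  lra.
Qed.

Lemma equilibrium_of_node_balance e :
  in_Xi n e -> (forall i, (i < n)%nat -> node_balance (d i) (h i) (mv n B e i) (e i) = 0) ->
  is_equilibrium n d B h e.
Proof.
  intros He Hbal. split; auto. intros i Hi. specialize (Hbal i Hi).
  unfold node_balance in Hbal. rewrite clamp01_id in Hbal by (apply He; auto).
  unfold sis_rhs. lra.
Qed.

Fixpoint equilibrium_iterate (k : nat) : nat -> R :=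
  match k with
  | O => fun _ => 1
  | S k => fun i => node_equilibrium (d i) (h i) (mv n B (equilibrium_iterate k) i)
  end.

Lemma equilibrium_iterate_in_Xi k : in_Xi n (equilibrium_iterate k).
Proof.
  induction k; intros i Hi; simpl; [lra |].
  apply node_equilibrium_spec; auto. apply mv_nonneg; auto. intros; apply IHk; auto.
Qed.

Lemma equilibrium_iterate_balance k i : (i < n)%nat ->
  node_balance (d i) (h i) (mv n B (equilibrium_iterate k) i) (equilibrium_iterate (S k) i) = 0.
Proof.
  intros Hi. apply node_equilibrium_spec; auto.
  apply mv_nonneg; auto. intros; apply equilibrium_iterate_in_Xi; auto.
Qed.

Lemma equilibrium_iterate_decreasing k i : (i < n)%nat ->
  equilibrium_iterate (S k) i <= equilibrium_iterate k i.
Proof.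
  revert i. induction k; intros i Hi; [apply equilibrium_iterate_in_Xi; auto |].
  apply (node_balance_comparison (d i) (h i) (mv n B (equilibrium_iterate (S k)) i)
           (mv n B (equilibrium_iterate k) i)); auto; try apply equilibrium_iterate_in_Xi; auto.
  - split; [apply mv_nonneg; auto; intros; apply equilibrium_iterate_in_Xi; auto |].
    apply mv_le; auto.
  - right; apply equilibrium_iterate_balance; auto.
  - apply equilibrium_iterate_balance; auto.
Qed.

Lemma equilibrium_iterate_above y :
  in_Xi n y -> (forall i, (i < n)%nat -> node_balance (d i) (h i) (mv n B y i) (y i) <= 0) ->
  forall k i, (i < n)%nat -> y i <= equilibrium_iterate k i.
Proof.
  intros Hy Hsub k. induction k; intros i Hi; [apply Hy; auto |].
  apply (node_balance_comparison (d i) (h i) (mv n B y i) (mv n B (equilibrium_iterate k) i));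
    auto; try apply equilibrium_iterate_in_Xi; auto.
  - split; [apply mv_nonneg; auto; intros; apply Hy; auto | apply mv_le; auto].
  - apply equilibrium_iterate_balance; auto.
Qed.

Lemma equilibrium_above_subsolution y :
  in_Xi n y -> (forall i, (i < n)%nat -> node_balance (d i) (h i) (mv n B y i) (y i) <= 0) ->
  exists e, is_equilibrium n d B h e /\ forall i, (i < n)%nat -> y i <= e i.
Proof.
  intros Hy Hsub.
  set (e := fun i => epsilon (inhabits 0) (fun l => Un_cv (fun k => equilibrium_iterate k i) l)).
  assert (He : forall i, (i < n)%nat -> Un_cv (fun k => equilibrium_iterate k i) (e i)).
  { intros i Hi. unfold e. cbv beta. apply epsilon_spec.
    destruct (decreasing_cv (fun k => equilibrium_iterate k i)) as [l Hl];
      [intros k; apply equilibrium_iterate_decreasing; auto | | exists l; auto].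
    exists 0. intros z [k ->]. unfold opp_seq.
    specialize (equilibrium_iterate_in_Xi k i Hi). lra. }
  assert (HyE : forall i, (i < n)%nat -> y i <= e i)
    by (intros i Hi; apply (Un_cv_ge_eventually _ _ _ 0 (He i Hi));
        intros; apply equilibrium_iterate_above; auto).
  assert (HeX : in_Xi n e).
  { intros i Hi. split; [specialize (Hy i Hi); specialize (HyE i Hi); lra |].
    apply (Un_cv_le_eventually _ _ _ 0 (He i Hi)). intros; apply equilibrium_iterate_in_Xi; auto. }
  exists e. split; auto. apply equilibrium_of_node_balance; auto. intros i Hi.
  assert (Hshift : Un_cv (fun k => equilibrium_iterate (S k) i) (e i)).
  { intros eps Heps. destruct (He i Hi eps Heps) as [N HN]. exists N. intros; apply HN; lia. }
  apply (UL_sequence (fun k => node_balance (d i) (h i) (mv n B (equilibrium_iterate k) i)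
                                  (equilibrium_iterate (S k) i))).
  - unfold node_balance. apply CV_minus; [apply CV_mult; auto | apply Un_cv_mv; auto].
    apply CV_plus; [apply CV_plus; [apply Un_cv_const |] | apply Un_cv_mv; auto].
    apply (continuity_seq (fun z => h i (clamp01 z))); auto. apply good_h_continuity_pt; auto.
  - eapply Un_cv_ext; [| apply Un_cv_const]. intros k. symmetry. apply equilibrium_iterate_balance; auto.
Qed.

(* Uses [h_i (0) = 0] and the continuity of [h_i] at 0. *)
Lemma exists_small_scale hi a M r : good_h hi -> 0 < a -> 0 <= M -> 0 < r ->
  exists e, 0 < e /\ e * a <= 1 /\ hi (e * a) + e * M <= r.
Proof.
  intros Hg Ha HM Hr.
  destruct (good_h_continuous_within01 hi 0 Hg ltac:(unfold I01; lra) (r / 2) ltac:(lra))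
    as [dl [Hdl H1]].
  set (q := Rmin (Rmin (dl / 2) 1) (r / 2)).
  assert (Hq : 0 < q) by (unfold q; repeat apply Rmin_glb_lt; lra).
  assert (Hq1 : q <= Rmin (dl / 2) 1) by apply Rmin_l.
  assert (Hq2 : q <= r / 2) by apply Rmin_r.
  assert (Rmin (dl / 2) 1 <= dl / 2) by apply Rmin_l. assert (Rmin (dl / 2) 1 <= 1) by apply Rmin_r.
  set (e := q / (a + M + 1)). assert (He : 0 < e) by (apply Rdiv_lt_0_compat; lra).
  assert (Hqe : e * (a + M + 1) = q) by (unfold e; field; lra).
  assert (Hea : 0 < e * a <= q) by (split; [apply Rmult_lt_0_compat | ]; nra).
  exists e. split; auto. split; [lra |].
  specialize (H1 (e * a) ltac:(unfold I01; lra) ltac:(rewrite Rminus_0_r, Rabs_right; lra)).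
  destruct Hg as [_ [_ [_ [_ Hh00]]]]. rewrite Hh00, Rminus_0_r in H1. apply Rabs_def2 in H1.
  nra.
Qed.

Lemma small_subsolution : (exists s, spectral_abscissa n (mDpB d B) s /\ 0 < s) ->
  exists y, in_Xi n y /\ ~ veq n y zerov /\
    forall i, (i < n)%nat -> node_balance (d i) (h i) (mv n B y i) (y i) <= 0.
Proof.
  intros Hs.
  destruct (positive_subsolution n d B B_nonneg Hs) as [a [r [Hr [Ha0 [[i0 [Hi0 Hai0]] Hsub]]]]].
  assert (HBa : forall i, (i < n)%nat -> 0 <= mv n B a i) by (intros; apply mv_nonneg; auto).
  destruct (exists_uniform_small n (fun j e => (j < n)%nat ->
              e * a j <= 1 /\ (0 < a j -> h j (e * a j) + e * mv n B a j <= r))) as [ep [Hep Hep']].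
  { intros j e e' He' H1 Hj. destruct (H1 Hj) as [H1a H1b]. specialize (Ha0 j Hj).
    assert (0 <= e' * a j <= e * a j) by (split; [apply Rmult_le_pos | apply Rmult_le_compat_r]; lra).
    split; [lra |]. intros Haj. specialize (H1b Haj).
    assert (h j (e' * a j) <= h j (e * a j)) by (apply h_monotone; auto; unfold I01; lra).
    assert (e' * mv n B a j <= e * mv n B a j) by (apply Rmult_le_compat_r; [apply HBa; auto | lra]).
    lra. }
  { intros j Hj. destruct (Ha0 j Hj) as [Haj|Haj].
    - destruct (exists_small_scale (h j) (a j) (mv n B a j) r (h_good j Hj) Haj (HBa j Hj) Hr)
        as [e [He [H1 H2]]].
      exists e. auto.
    - exists 1. split; [lra |]. intros _. rewrite <- Haj. split; [lra | intros; lra]. }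
  assert (Hy : in_Xi n (fun i => ep * a i)).
  { intros i Hi. split; [apply Rmult_le_pos; [lra | apply Ha0; auto] | apply (Hep' i Hi Hi)]. }
  exists (fun i => ep * a i). split; [auto | split].
  - intros Hv. specialize (Hv i0 Hi0). unfold zerov in Hv. nra.
  - intros i Hi. unfold node_balance. rewrite clamp01_id, mv_scal by (apply Hy; auto).
    specialize (d_pos i Hi). specialize (Hsub i Hi). destruct (Ha0 i Hi) as [Hai|Hai].
    + destruct (Hep' i Hi Hi) as [_ H2]. specialize (H2 Hai).
      assert (0 < ep * a i) by (apply Rmult_lt_0_compat; auto).
      assert (ep * a i * (d i + h i (ep * a i) + ep * mv n B a i) <= ep * a i * (d i + r))
        by (apply Rmult_le_compat_l; lra).
      assert (ep * (r * a i) <= ep * (mv n B a i - d i * a i)) by (apply Rmult_le_compat_l; lra).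
      nra.
    + rewrite <- Hai. assert (0 <= ep * mv n B a i) by (apply Rmult_le_pos; [lra | apply HBa; auto]).
      nra.
Qed.

Lemma exists_endemic_equilibrium : (exists s, spectral_abscissa n (mDpB d B) s /\ 0 < s) ->
  exists e, is_equilibrium n d B h e /\ ~ veq n e zerov.
Proof.
  intros Hs. destruct (small_subsolution Hs) as [y [Hy [Hynz Hsub]]].
  destruct (equilibrium_above_subsolution y Hy Hsub) as [e [He Hye]].
  exists e. split; auto. intros Hv. apply Hynz. intros i Hi.
  specialize (Hv i Hi). specialize (Hye i Hi). specialize (Hy i Hi). unfold zerov in *. lra.
Qed.

End SIS.

Theorem theorem4 (n : nat) (d : nat -> R) (B : nat -> nat -> R)
  (h : nat -> R -> R)
  (Hn : (2 <= n)%nat)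
  (Hd : forall i, (i < n)%nat -> 0 < d i)
  (HB : forall i j, (i < n)%nat -> (j < n)%nat -> 0 <= B i j)
  (Hirr : irreducible n B)
  (Hh : forall i, (i < n)%nat -> good_h (h i))
  (Hs : exists s, spectral_abscissa n (mDpB d B) s /\ 0 < s) :
  exists xs : nat -> R,
    is_equilibrium n d B h zerov /\
    unstable n d B h zerov /\
    is_equilibrium n d B h xs /\ in_int_Xi n xs /\
    loc_exp_stable n d B h xs /\
    (forall e, is_equilibrium n d B h e -> veq n e zerov \/ veq n e xs) /\
    (forall x, is_solution n d B h x -> ~ veq n (x 0) zerov ->
       exists C gamma, 0 < gamma /\
         forall t, 0 <= t -> vnorm n (vsub (x t) xs) <= C * exp (- gamma * t)).
Proof.
  assert (Hn0 : (0 < n)%nat) by lia.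
  destruct (exists_endemic_equilibrium n d B h Hd HB Hh Hs) as [xs [Hxs Hnz]].
  assert (Hint := equilibrium_interior n d B h Hd HB Hh Hirr xs Hxs Hnz).
  exists xs. split; [| split; [| split; [| split; [| split; [| split]]]]]; auto.
  - apply zerov_equilibrium.
  - apply (zerov_unstable n d B h Hd HB Hh Hirr xs Hxs Hint Hn0).
    apply exists_solution; auto.
  - apply equilibrium_loc_exp_stable; auto.
  - intros e He. destruct (classic (veq n e zerov)) as [H|H]; [left; auto | right].
    apply (endemic_equilibrium_unique n d B h Hd HB Hh Hirr xs Hxs Hint e); auto.
  - intros x Hsol Hx. apply (solution_exp_convergence n d B h Hd HB Hh Hirr xs Hxs Hint x); auto.
Qed.
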